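(* Fix $s\in(0,2]$. As $d\to\infty$, $$\bar{\sigma}_0^2(s,d)=\frac{2}{d}+\frac{5(2-s)}{2d^2}+o\Big(\frac1{d^2}\Big),\qquad \bar{\sigma}_0(s,d)=\frac{\sqrt2}{\sqrt d}+\frac{5\sqrt2(2-s)}{8d\sqrt d}+o\Big(\frac1{d\sqrt d}\Big).$$
   Context: For integers $d\ge1$ and real $s>0$, let $I_0(s,d)=2^{s/2}\sum_{n=1}^{d}\binom{d}{n}2^{-d}\,\Gamma(n/2+s/2)/\Gamma(n/2)$ and $\bar{\sigma}_0(s,d)=I_0(s,d)^{-1/s}$. (Equivalently $I_0(s,d)=\mathbb{E}\|\max(Z,0)\|^s$ for $Z\sim\mathcal N(0,I_d)$, the maximum taken componentwise, and $\bar\sigma_0(s,d)$ is the weight standard deviation at which a zero-bias ReLU network of width $d$ with i.i.d. $\mathcal N(0,\sigma^2)$ weights preserves the $s$-th moment of the norm of layer outputs.) *)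

From Stdlib Require Import Reals.
From Coquelicot Require Import Coquelicot.
Open Scope R_scope.

Definition Gamma (x : R) : R :=
  RInt_gen (fun t => Rpower t (x - 1) * exp (- t))
           (at_right 0) (Rbar_locally p_infty).

Definition I0 (s : R) (d : nat) : R :=
  Rpower 2 (s / 2) *
  sum_n_m (fun n : nat =>
             Binomial.C d n / 2 ^ d * (Gamma (INR n / 2 + s / 2) / Gamma (INR n / 2)))
          1 d.

Definition sigma0 (s : R) (d : nat) : R := Rpower (I0 s d) (- (1 / s)).

From Stdlib Require Import Reals Lra Lia Psatz.
From Coquelicot Require Import Coquelicot.
Open Scope R_scope.

(* Put r = s/2 and let N ~ Bin(d, 1/2).  Then I_0(s, d) = (d/2)^r S_d with
   S_d = E[(2/d)^r 2^r Gamma(N/2 + r)/Gamma(N/2)] (the N = 0 term being 0), so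
   sigma_bar_0(s, d) = S_d^(-1/s) sqrt(2/d).  The heart of the proof is
   d (S_d - 1) -> 5 r (r - 1)/2; applied to the powers p = -2/s and p = -1/s,
   d (S_d^p - 1) -> 5 p r (r - 1)/2 yields both expansions.

   The limit of d (S_d - 1) is obtained in four steps:
   1. Gamma: convergence of the integral, Gamma(y + 1) = y Gamma(y), and Wendel's
      inequality Gamma(x + r) <= x^r Gamma(x), from the convexity of exp.
   2. Gamma(x + r)/Gamma(x) = (x + (r - 1)/2)^r e^(L_r(x)) with |L_r(x)| <= 24/x^2:
      the functional equation gives L_r(x + 1) - L_r(x) = O(x^-3), Wendel gives
      L_r(x) = O(1/x), and telescoping improves the latter to O(x^-2).
   3. Hence the summand equals Y^r, Y = 2(N + r - 1)/d, up to O(1/d^2 + (N - d/2)^4/d^4),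
      and Y^r equals its cubic Taylor polynomial P3(Y) at 1 up to O((Y - 1)^4).
   4. The means of P3(Y) and of the error majorant are computed exactly from the
      central moments of Bin(d, 1/2) up to order four: d (E[P3(Y)] - 1) tends to
      5 r (r - 1)/2 and d times the mean of the majorant tends to 0. *)

Lemma exp_le x y : x <= y -> exp x <= exp y.
Proof. intros [H|H]; [left; now apply exp_increasing | subst; lra]. Qed.

Lemma Rpower_pos x y : 0 < Rpower x y.
Proof. apply exp_pos. Qed.

Lemma Rpower_1_base y : Rpower 1 y = 1.
Proof. unfold Rpower. rewrite ln_1, Rmult_0_r. apply exp_0. Qed.

Lemma ln_le_sub1 u : 0 < u -> ln u <= u - 1.
Proof. intros Hu. pose proof (exp_ineq1_le (ln u)) as Hexp. rewrite exp_ln in Hexp by auto. lra. Qed.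

Lemma ln1p_le u : -1 < u -> ln (1 + u) <= u.
Proof. intros H. pose proof (ln_le_sub1 (1 + u) ltac:(lra)). lra. Qed.

Lemma ln1p_ge u : -1 < u -> u / (1 + u) <= ln (1 + u).
Proof.
  intros H. pose proof (ln_le_sub1 (/ (1 + u)) ltac:(apply Rinv_0_lt_compat; lra)) as Hl.
  rewrite ln_Rinv in Hl by lra.
  replace (u / (1 + u)) with (- (/ (1 + u) - 1)) by (field; lra). lra.
Qed.

(* Convexity of [exp]: the inequality behind Wendel's bound for Gamma. *)
Lemma exp_convex a b r : 0 <= r <= 1 ->
  exp ((1 - r) * a + r * b) <= (1 - r) * exp a + r * exp b.
Proof.
  intros Hr. set (m := (1 - r) * a + r * b).
  assert (Ea : exp a = exp m * exp (a - m)) by (rewrite <- exp_plus; f_equal; ring).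
  assert (Eb : exp b = exp m * exp (b - m)) by (rewrite <- exp_plus; f_equal; ring).
  pose proof (exp_ineq1_le (a - m)). pose proof (exp_ineq1_le (b - m)).
  pose proof (exp_pos m).
  assert (exp m * (1 + (a - m)) <= exp a) by (rewrite Ea; apply Rmult_le_compat_l; lra).
  assert (exp m * (1 + (b - m)) <= exp b) by (rewrite Eb; apply Rmult_le_compat_l; lra).
  assert ((1 - r) * (exp m * (1 + (a - m))) + r * (exp m * (1 + (b - m))) = exp m)
    by (unfold m; ring).
  nra.
Qed.

Lemma exp_m1_bound w : Rabs (exp w - 1) <= Rabs w * exp (Rabs w).
Proof.
  destruct (Rle_or_lt 0 w) as [H|H].
  - rewrite (Rabs_pos_eq w) by lra.
    assert (1 <= exp w) by (rewrite <- exp_0; apply exp_le; lra).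
    rewrite Rabs_pos_eq by lra.
    pose proof (exp_ineq1_le (- w)).
    assert (exp w * exp (- w) = 1) by (rewrite <- exp_plus, Rplus_opp_r; apply exp_0).
    pose proof (exp_pos w). nra.
  - rewrite (Rabs_left w) by lra.
    assert (exp w <= 1) by (rewrite <- exp_0; apply exp_le; lra).
    rewrite Rabs_left1 by lra.
    pose proof (exp_ineq1_le w).
    assert (1 <= exp (- w)) by (rewrite <- exp_0; apply exp_le; lra).
    nra.
Qed.

Lemma rpow_exp_bound c : exists K, forall t, 1 <= t -> Rpower t c <= exp (t / 2 + K).
Proof.
  set (k := Rabs c + 1).
  assert (Hk : 0 < k) by (unfold k; pose proof (Rabs_pos c); lra).
  set (eps := / (2 * k)).
  assert (He : 0 < eps) by (unfold eps; apply Rinv_0_lt_compat; lra).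
  exists (k * (- 1 - ln eps)). intros t Ht. unfold Rpower. apply exp_le.
  assert (Hlt : ln t <= eps * t - 1 - ln eps).
  { pose proof (ln_le_sub1 (eps * t) ltac:(apply Rmult_lt_0_compat; lra)) as H.
    rewrite ln_mult in H by lra. lra. }
  assert (Hl0 : 0 <= ln t) by (rewrite <- ln_1; apply ln_le; lra).
  assert (c * ln t <= k * ln t).
  { apply Rmult_le_compat_r; [auto|]. unfold k. pose proof (Rle_abs c). lra. }
  assert (k * ln t <= k * (eps * t - 1 - ln eps)) by (apply Rmult_le_compat_l; lra).
  assert (k * (eps * t) = t / 2) by (unfold eps; field; lra).
  nra.
Qed.

Lemma Rpower_derive c t : 0 < t ->
  is_derive (fun u => Rpower u c) t (c * Rpower t (c - 1)).
Proof. intros Ht. apply is_derive_Reals. now apply derivable_pt_lim_power. Qed.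

Lemma continuous_of_derive (f : R -> R) t l : is_derive f t l -> continuous f t.
Proof.
  intros H. apply (ex_derive_continuous (K:=R_AbsRing) (V:=R_NormedModule)).
  now exists l.
Qed.

Lemma Rpower_continuous c t : 0 < t -> continuous (fun u => Rpower u c) t.
Proof. intros Ht. eapply continuous_of_derive. now apply Rpower_derive. Qed.

Lemma mvt_closed (f df : R -> R) a b : a <= b ->
  (forall t, a <= t <= b -> is_derive f t (df t)) ->
  exists c, a <= c <= b /\ f b - f a = df c * (b - a).
Proof.
  intros Hab Hd.
  destruct (MVT_gen f a b df) as [c [Hc Hf]].
  - intros x Hx. rewrite Rmin_left, Rmax_right in Hx by lra. apply Hd; lra.
  - intros x Hx. rewrite Rmin_left, Rmax_right in Hx by lra.
    apply continuity_pt_filterlim. eapply continuous_of_derive. apply Hd. lra.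
  - rewrite Rmin_left, Rmax_right in Hc by lra. exists c; auto.
Qed.

Lemma mvt_pow_bound (f df : R -> R) (M : R) (k : nat) (lo hi : R) :
  0 <= M -> lo <= 1 <= hi -> f 1 = 0 ->
  (forall t, lo <= t <= hi -> is_derive f t (df t)) ->
  (forall t, lo <= t <= hi -> Rabs (df t) <= M * Rabs (t - 1) ^ k) ->
  forall y, lo <= y <= hi -> Rabs (f y) <= M * Rabs (y - 1) ^ (S k).
Proof.
  intros HM0 Hlh Hf1 Hd Hb y Hy.
  assert (HM : forall c, lo <= c <= hi -> Rabs (c - 1) <= Rabs (y - 1) ->
            Rabs (df c * (y - 1)) <= M * Rabs (y - 1) ^ S k).
  { intros c Hc Hcy. rewrite Rabs_mult. simpl.
    rewrite (Rmult_comm (Rabs (y - 1))), <- Rmult_assoc.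
    apply Rmult_le_compat_r; [apply Rabs_pos|].
    eapply Rle_trans; [now apply Hb|].
    apply Rmult_le_compat_l; [auto|]. apply pow_incr. split; [apply Rabs_pos | auto]. }
  destruct (Rle_or_lt 1 y) as [H1|H1].
  - destruct (mvt_closed f df 1 y H1) as [c [Hc Hfc]]; [intros t Ht; apply Hd; lra|].
    rewrite Hf1, Rminus_0_r in Hfc. rewrite Hfc. apply HM; [lra|].
    rewrite !Rabs_pos_eq by lra. lra.
  - destruct (mvt_closed f df y 1 ltac:(lra)) as [c [Hc Hfc]]; [intros t Ht; apply Hd; lra|].
    rewrite Hf1 in Hfc. replace (f y) with (df c * (y - 1)) by lra. apply HM; [lra|].
    rewrite !Rabs_left1 by lra. lra.
Qed.

Lemma window_eventually :
  filter_prod (at_right 0) (Rbar_locally p_infty) (fun ab => 0 < fst ab < snd ab).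
Proof.
  exists (fun a => 0 < a < 1) (fun b => 1 < b).
  - exists (mkposreal 1 Rlt_0_1). intros y Hy Hy0. split; [exact Hy0|].
    assert (Hy' : Rabs (y - 0) < 1) by exact Hy. apply Rabs_def2 in Hy'. lra.
  - now exists 1.
  - intros a b Ha Hb. simpl. lra.
Qed.

Lemma window_eventually_in (P : R -> Prop) : (forall x, 0 < x -> P x) ->
  filter_prod (at_right 0) (Rbar_locally p_infty)
    (fun ab => forall x, Rmin (fst ab) (snd ab) <= x <= Rmax (fst ab) (snd ab) -> P x).
Proof.
  intros HP. generalize window_eventually. apply filter_imp.
  intros [a b] Hab x Hx. simpl in *. apply HP.
  rewrite Rmin_left in Hx by lra. lra.
Qed.

Lemma ex_RInt_pos (g : R -> R) a b :
  (forall t, 0 < t -> continuous g t) -> 0 < a -> a <= b -> ex_RInt g a b.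
Proof.
  intros Hc Ha Hab. apply (ex_RInt_continuous (V:=R_CompleteNormedModule)). intros z Hz.
  apply Hc. rewrite Rmin_left in Hz by lra. lra.
Qed.

Lemma RInt_mono_interval (g : R -> R) a' a b b' :
  (forall t, a' < t < b' -> 0 <= g t) ->
  (forall u v, a' <= u -> u <= v -> v <= b' -> ex_RInt g u v) ->
  a' <= a -> a <= b -> b <= b' -> RInt g a b <= RInt g a' b'.
Proof.
  intros Hp Hex H1 H2 H3.
  assert (C1 := RInt_Chasles (V:=R_CompleteNormedModule) g a' a b'
    (Hex a' a ltac:(lra) ltac:(lra) ltac:(lra)) (Hex a b' ltac:(lra) ltac:(lra) ltac:(lra))).
  assert (C2 := RInt_Chasles (V:=R_CompleteNormedModule) g a b b'
    (Hex a b ltac:(lra) ltac:(lra) ltac:(lra)) (Hex b b' ltac:(lra) ltac:(lra) ltac:(lra))).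
  change plus with Rplus in C1, C2.
  assert (0 <= RInt g a' a) by (apply RInt_ge_0; [lra | apply Hex; lra | intros; apply Hp; lra]).
  assert (0 <= RInt g b b') by (apply RInt_ge_0; [lra | apply Hex; lra | intros; apply Hp; lra]).
  lra.
Qed.

Lemma lub_approx (E : R -> Prop) l eps : is_lub E l -> 0 < eps ->
  exists v, E v /\ l - eps < v.
Proof.
  intros [Hub Hlub] He. apply Classical_Prop.NNPP. intros Hn.
  assert (l <= l - eps); [|lra].
  apply Hlub. intros v Hv. apply Rnot_lt_le. intros Hlt. apply Hn. now exists v.
Qed.

Lemma improper_integral_bounded (f : R -> R) (M : R) :
  (forall t, 0 < t -> continuous f t) -> (forall t, 0 < t -> 0 <= f t) ->
  (forall a b, 0 < a -> a <= b -> RInt f a b <= M) ->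
  exists l, is_RInt_gen f (at_right 0) (Rbar_locally p_infty) l /\
            (forall a b, 0 < a -> a <= b -> RInt f a b <= l).
Proof.
  intros Hc Hp HM.
  set (E := fun v => exists a b, 0 < a /\ a <= b /\ v = RInt f a b).
  destruct (completeness E) as [l Hl].
  { exists M. intros v [a [b [Ha [Hab ->]]]]. now apply HM. }
  { exists (RInt f 1 1), 1, 1. repeat split; lra. }
  assert (Hle : forall a b, 0 < a -> a <= b -> RInt f a b <= l).
  { intros a b Ha Hab. apply (proj1 Hl). now exists a, b. }
  exists l. split; [|exact Hle].
  apply filterlimi_lim_ext_loc with (f := fun ab => RInt f (fst ab) (snd ab)).
  { generalize window_eventually. apply filter_imp. intros [a b] Hab. simpl in *.
    apply (RInt_correct (V:=R_CompleteNormedModule)), ex_RInt_pos; auto; lra. }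
  intros P [eps HP].
  destruct (lub_approx E l eps Hl (cond_pos eps)) as [v [[a0 [b0 [Ha0 [Hab0 ->]]]] Hv]].
  exists (fun a => 0 < a < a0) (fun b => b0 < b).
  - exists (mkposreal a0 Ha0). intros y Hy Hy0. split; [exact Hy0|].
    assert (Hy' : Rabs (y - 0) < a0) by exact Hy. apply Rabs_def2 in Hy'. lra.
  - now exists b0.
  - intros a b Ha Hb. simpl. apply HP. change (Rabs (RInt f a b - l) < eps).
    assert (RInt f a0 b0 <= RInt f a b).
    { apply RInt_mono_interval; try lra.
      - intros t Ht. apply Hp. lra.
      - intros u w Hu Huw Hw. apply ex_RInt_pos; auto; lra. }
    assert (RInt f a b <= l) by (apply Hle; lra).
    rewrite Rabs_left1 by lra. lra.
Qed.

Lemma filterlim_right0 (f : R -> R) :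
  (forall eps, 0 < eps -> exists d, 0 < d /\ forall t, 0 < t < d -> Rabs (f t) < eps) ->
  filterlim f (at_right 0) (locally 0).
Proof.
  intros H P [eps HP]. destruct (H eps (cond_pos eps)) as [d [Hd Hf]].
  exists (mkposreal d Hd). intros t Ht Ht0. apply HP.
  assert (H1 : Rabs (t - 0) < d) by exact Ht. apply Rabs_def2 in H1.
  change (Rabs (f t - 0) < eps). rewrite Rminus_0_r. apply Hf. lra.
Qed.

Lemma filterlim_pinfty0 (f : R -> R) :
  (forall eps, 0 < eps -> exists M, forall t, M < t -> Rabs (f t) < eps) ->
  filterlim f (Rbar_locally p_infty) (locally 0).
Proof.
  intros H P [eps HP]. destruct (H eps (cond_pos eps)) as [M HM].
  exists M. intros t Ht. apply HP.
  change (Rabs (f t - 0) < eps). rewrite Rminus_0_r. now apply HM.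
Qed.

(** * The Gamma function *)

Definition gamma_integrand (y t : R) := Rpower t (y - 1) * exp (- t).

Lemma gamma_integrand_pos y t : 0 < gamma_integrand y t.
Proof. apply Rmult_lt_0_compat; [apply Rpower_pos | apply exp_pos]. Qed.

Lemma gamma_integrand_continuous y t : 0 < t -> continuous (gamma_integrand y) t.
Proof.
  intros Ht. eapply continuous_of_derive.
  apply (Derive.is_derive_mult (fun u => Rpower u (y - 1)) (fun u => exp (- u))).
  - now apply Rpower_derive.
  auto_derive; [auto | reflexivity].
Qed.

(* Near 0: the integral over [a, 1] is at most that of t^(y-1), i.e. 1/y. *)
Lemma gamma_integral_head y a : 0 < y -> 0 < a <= 1 ->
  RInt (gamma_integrand y) a 1 <= / y.
Proof.
  intros Hy Ha.
  assert (HI : is_RInt (fun t => Rpower t (y - 1)) a 1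
                 (minus (Rpower 1 y / y) (Rpower a y / y))).
  { apply (is_RInt_derive (V:=R_CompleteNormedModule) (fun t => Rpower t y / y)).
    - intros x Hx. rewrite Rmin_left in Hx by lra.
      apply (is_derive_ext (fun t => / y * Rpower t y)); [intros t; simpl; unfold Rdiv; ring|].
      replace (Rpower x (y - 1)) with (/ y * (y * Rpower x (y - 1))) by (field; lra).
      apply is_derive_scal, Rpower_derive. lra.
    - intros x Hx. rewrite Rmin_left in Hx by lra. apply Rpower_continuous. lra. }
  eapply Rle_trans.
  { apply RInt_le; [lra | apply ex_RInt_pos; [apply gamma_integrand_continuous | lra | lra]
                   | eexists; exact HI |].
    intros x Hx. unfold gamma_integrand. rewrite <- (Rmult_1_r (Rpower x (y - 1))) at 2.
    apply Rmult_le_compat_l; [left; apply Rpower_pos|].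
    rewrite <- exp_0. apply exp_le. lra. }
  rewrite (is_RInt_unique _ _ _ _ HI), Rpower_1_base. unfold minus, plus, opp; simpl.
  assert (0 < Rpower a y / y) by (apply Rdiv_lt_0_compat; [apply Rpower_pos | lra]).
  unfold Rdiv in *. lra.
Qed.

(* Away from 0: t^(y-1) e^(-t) <= e^K e^(-t/2) gives a uniform bound on [1, b]. *)
Lemma gamma_integral_tail y : exists K, forall b, 1 <= b ->
  RInt (gamma_integrand y) 1 b <= K.
Proof.
  destruct (rpow_exp_bound (y - 1)) as [c Hc].
  exists (2 * exp c). intros b Hb.
  assert (HI : is_RInt (fun t => exp c * exp (- t / 2)) 1 b
                 (minus (-2 * exp c * exp (- b / 2)) (-2 * exp c * exp (- 1 / 2)))).
  { apply (is_RInt_derive (V:=R_CompleteNormedModule) (fun t => -2 * exp c * exp (- t / 2))).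
    - intros x Hx. auto_derive; [auto|]. unfold Rdiv. field.
    - intros x Hx. apply (ex_derive_continuous (K:=R_AbsRing) (V:=R_NormedModule)).
      auto_derive. auto. }
  eapply Rle_trans.
  { apply RInt_le; [lra | apply ex_RInt_pos; [apply gamma_integrand_continuous | lra | lra]
                   | eexists; exact HI |].
    intros x Hx. unfold gamma_integrand.
    eapply Rle_trans; [apply Rmult_le_compat_r; [left; apply exp_pos | apply Hc; lra]|].
    rewrite <- exp_plus. replace (x / 2 + c + - x) with (c + - x / 2) by field.
    rewrite exp_plus. lra. }
  rewrite (is_RInt_unique _ _ _ _ HI). unfold minus, plus, opp; simpl.
  assert (exp (- 1 / 2) <= 1) by (rewrite <- exp_0; apply exp_le; lra).
  pose proof (exp_pos c). pose proof (exp_pos (- b / 2)). nra.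
Qed.

Lemma Gamma_spec y : 0 < y ->
  is_RInt_gen (gamma_integrand y) (at_right 0) (Rbar_locally p_infty) (Gamma y)
  /\ 0 < Gamma y.
Proof.
  intros Hy. destruct (gamma_integral_tail y) as [K HK].
  destruct (improper_integral_bounded (gamma_integrand y) (/ y + K)) as [l [Hl Hle]].
  - intros; now apply gamma_integrand_continuous.
  - intros; left; apply gamma_integrand_pos.
  - intros a b Ha Hab.
    assert (Hc := gamma_integrand_continuous y).
    assert (0 < Rmin a 1) by (apply Rmin_glb_lt; lra).
    pose proof (Rmin_r a 1). pose proof (Rmax_r b 1).
    eapply Rle_trans.
    { apply (RInt_mono_interval _ (Rmin a 1) a b (Rmax b 1));
        [intros; left; apply gamma_integrand_pos
        | intros; apply ex_RInt_pos; auto; lra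
        | apply Rmin_l | lra | apply Rmax_l]. }
    rewrite <- (RInt_Chasles (V:=R_CompleteNormedModule) _ (Rmin a 1) 1 (Rmax b 1))
      by (apply ex_RInt_pos; auto; lra).
    change plus with Rplus. apply Rplus_le_compat.
    + apply gamma_integral_head; lra.
    + now apply HK.
  - assert (HG : Gamma y = l) by exact (is_RInt_gen_unique _ _ Hl).
    rewrite HG. split; [exact Hl|].
    apply Rlt_le_trans with (RInt (gamma_integrand y) 1 2); [| apply Hle; lra].
    apply RInt_gt_0; [lra | intros; apply gamma_integrand_pos
                     | intros; apply gamma_integrand_continuous; lra].
Qed.

Lemma rpow_exp_lim_0 y : 0 < y ->
  filterlim (fun t => Rpower t y * exp (- t)) (at_right 0) (locally 0).
Proof.
  intros Hy. apply filterlim_right0. intros eps Heps.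
  exists (Rpower eps (/ y)). split; [apply Rpower_pos|].
  intros t [Ht0 Ht1].
  rewrite Rabs_pos_eq by (left; apply Rmult_lt_0_compat; [apply Rpower_pos | apply exp_pos]).
  assert (Rpower t y < eps).
  { replace eps with (Rpower (Rpower eps (/ y)) y).
    - apply Rlt_Rpower_l; lra.
    - rewrite Rpower_mult. replace (/ y * y) with 1 by (field; lra). apply Rpower_1. lra. }
  assert (exp (- t) <= 1) by (rewrite <- exp_0; apply exp_le; lra).
  pose proof (Rpower_pos t y). nra.
Qed.

Lemma rpow_exp_lim_infty y :
  filterlim (fun t => Rpower t y * exp (- t)) (Rbar_locally p_infty) (locally 0).
Proof.
  apply filterlim_pinfty0. intros eps Heps.
  destruct (rpow_exp_bound y) as [c Hc].
  exists (Rmax 1 (2 * (c - ln eps))). intros t Ht.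
  pose proof (Rmax_l 1 (2 * (c - ln eps))). pose proof (Rmax_r 1 (2 * (c - ln eps))).
  rewrite Rabs_pos_eq by (left; apply Rmult_lt_0_compat; [apply Rpower_pos | apply exp_pos]).
  eapply Rle_lt_trans; [apply Rmult_le_compat_r; [left; apply exp_pos | apply Hc; lra]|].
  rewrite <- exp_plus, <- (exp_ln eps Heps). apply exp_increasing. lra.
Qed.

Lemma rpow_exp_derive y t : 0 < t ->
  is_derive (fun u => Rpower u y * exp (- u)) t
            (y * gamma_integrand y t - gamma_integrand (y + 1) t).
Proof.
  intros Ht. unfold gamma_integrand. replace (y + 1 - 1) with y by ring.
  replace (y * (Rpower t (y - 1) * exp (- t)) - Rpower t y * exp (- t))
    with (y * Rpower t (y - 1) * exp (- t) + Rpower t y * (-1 * exp (- t))) by ring.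
  apply (Derive.is_derive_mult (fun u => Rpower u y) (fun u => exp (- u))).
  - now apply Rpower_derive.
  - auto_derive; [auto | ring].
Qed.

Lemma Gamma_succ y : 0 < y -> Gamma (y + 1) = y * Gamma y.
Proof.
  intros Hy.
  set (f := fun t => Rpower t y * exp (- t)).
  set (df := fun t => y * gamma_integrand y t - gamma_integrand (y + 1) t).
  assert (HD : forall t, 0 < t -> Derive f t = df t).
  { intros t Ht. apply is_derive_unique. now apply rpow_exp_derive. }
  assert (Hzero : is_RInt_gen df (at_right 0) (Rbar_locally p_infty) (0 - 0)).
  { apply (is_RInt_gen_ext (Derive f)).
    { generalize (window_eventually_in _ HD). apply filter_imp.
      intros ab H x Hx. apply H. lra. }
    apply is_RInt_gen_Derive.
    - apply window_eventually_in. intros t Ht. eexists. now apply rpow_exp_derive.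
    - apply window_eventually_in. intros t Ht.
      apply (continuous_ext_loc _ df).
      + assert (Hloc : locally t (fun u => 0 < u)).
        { exists (mkposreal (t / 2) ltac:(lra)). intros u Hu.
          assert (H : Rabs (u - t) < t / 2) by exact Hu. apply Rabs_def2 in H. lra. }
        generalize Hloc. apply filter_imp. intros u Hu. symmetry. now apply HD.
      + apply (continuous_minus (fun u => y * gamma_integrand y u)).
        * apply (continuous_scal_r y (gamma_integrand y)). now apply gamma_integrand_continuous.
        * now apply gamma_integrand_continuous.
    - now apply rpow_exp_lim_0.
    - apply rpow_exp_lim_infty. }
  assert (Hdiff : is_RInt_gen df (at_right 0) (Rbar_locally p_infty)
                    (y * Gamma y - Gamma (y + 1))).
  { apply (is_RInt_gen_minus (fun t => y * gamma_integrand y t)).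
    - apply (is_RInt_gen_scal (gamma_integrand y) y). now apply Gamma_spec.
    - apply Gamma_spec. lra. }
  assert (E := is_RInt_gen_unique _ _ Hzero). rewrite (is_RInt_gen_unique _ _ Hdiff) in E.
  lra.
Qed.

(* Pointwise log-convexity of the integrand in y (from convexity of exp):
   t^(x+r-1) <= (1-r) x^r t^(x-1) + r x^(r-1) t^x. *)
Lemma gamma_integrand_interpolate x r t : 0 < x -> 0 <= r <= 1 -> 0 < t ->
  gamma_integrand (x + r) t <=
  (1 - r) * Rpower x r * gamma_integrand x t
  + r * Rpower x (r - 1) * gamma_integrand (x + 1) t.
Proof.
  intros Hx Hr Ht. unfold gamma_integrand, Rpower.
  set (U := (x - 1) * ln t + - t + r * ln x).
  set (V := (x + 1 - 1) * ln t + - t + (r - 1) * ln x).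
  replace (exp ((x + r - 1) * ln t) * exp (- t)) with (exp ((1 - r) * U + r * V))
    by (rewrite <- exp_plus; f_equal; unfold U, V; ring).
  replace ((1 - r) * exp (r * ln x) * (exp ((x - 1) * ln t) * exp (- t)) +
           r * exp ((r - 1) * ln x) * (exp ((x + 1 - 1) * ln t) * exp (- t)))
    with ((1 - r) * exp U + r * exp V) by (unfold U, V; rewrite !exp_plus; ring).
  now apply exp_convex.
Qed.

Lemma Wendel_up x r : 0 < x -> 0 <= r <= 1 -> Gamma (x + r) <= Rpower x r * Gamma x.
Proof.
  intros Hx Hr.
  destruct (Gamma_spec x Hx) as [H1 P1].
  destruct (Gamma_spec (x + 1) ltac:(lra)) as [H2 P2].
  destruct (Gamma_spec (x + r) ltac:(lra)) as [H3 P3].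
  set (g := fun t => (1 - r) * Rpower x r * gamma_integrand x t
                     + r * Rpower x (r - 1) * gamma_integrand (x + 1) t).
  assert (Hg : is_RInt_gen g (at_right 0) (Rbar_locally p_infty)
                 ((1 - r) * Rpower x r * Gamma x + r * Rpower x (r - 1) * Gamma (x + 1))).
  { apply (is_RInt_gen_plus (fun t => (1 - r) * Rpower x r * gamma_integrand x t)
                            (fun t => r * Rpower x (r - 1) * gamma_integrand (x + 1) t)).
    - exact (is_RInt_gen_scal (gamma_integrand x) ((1 - r) * Rpower x r) _ H1).
    - exact (is_RInt_gen_scal (gamma_integrand (x + 1)) (r * Rpower x (r - 1)) _ H2). }
  assert (Hle : norm (Gamma (x + r)) <=
                (1 - r) * Rpower x r * Gamma x + r * Rpower x (r - 1) * Gamma (x + 1)).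
  { apply (RInt_gen_norm (Fa := at_right 0) (Fb := Rbar_locally p_infty) (gamma_integrand (x + r)) g); [| | exact H3 | exact Hg].
    - generalize window_eventually. apply filter_imp. intros ab H. lra.
    - generalize window_eventually. apply filter_imp. intros [a b] Hab t Ht. simpl in *.
      change (Rabs (gamma_integrand (x + r) t) <= g t).
      rewrite Rabs_pos_eq by (left; apply gamma_integrand_pos).
      apply gamma_integrand_interpolate; lra. }
  change (norm (Gamma (x + r))) with (Rabs (Gamma (x + r))) in Hle.
  rewrite Gamma_succ, Rabs_pos_eq in Hle by lra.
  assert (Hx1 : Rpower x (r - 1) * x = Rpower x r).
  { rewrite <- (Rpower_1 x) at 2 by lra. rewrite <- Rpower_plus. f_equal. ring. }
  rewrite <- Hx1 in Hle |- *. nra.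
Qed.

(* The companion lower bound, from Wendel_up applied at x + r with exponent 1 - r. *)
Lemma Wendel_low x r : 0 < x -> 0 <= r <= 1 ->
  x * Gamma x <= Rpower (x + r) (1 - r) * Gamma (x + r).
Proof.
  intros Hx Hr. rewrite <- Gamma_succ by lra.
  replace (x + 1) with ((x + r) + (1 - r)) by ring.
  apply Wendel_up; lra.
Qed.

(** * The ratio Gamma(x + r) / Gamma(x) *)

Lemma ln1p_bounds u : 0 <= u -> u - u ^ 2 / 2 <= ln (1 + u) <= u - u ^ 2 / 2 + u ^ 3.
Proof.
  intros Hu.
  set (phi := fun t => ln (1 + t) - t + t ^ 2 / 2).
  destruct (mvt_closed phi (fun t => t ^ 2 / (1 + t)) 0 u Hu) as [c [Hc Hphi]].
  { intros t Ht. unfold phi. auto_derive; [lra | field; lra]. }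
  unfold phi in Hphi. rewrite Rplus_0_r, ln_1 in Hphi.
  assert (0 <= c ^ 2 / (1 + c)) by (apply Rdiv_le_0_compat; nra).
  assert (c ^ 2 / (1 + c) <= c ^ 2).
  { apply Rle_div_l; [lra|]. nra. }
  assert (c ^ 2 <= u ^ 2) by nra.
  split; nra.
Qed.

Definition gamma_ratio (r x : R) := Gamma (x + r) / Gamma x.

(* The shift a_r = (r - 1)/2 for which Gamma(x + r)/Gamma(x) = (x + a_r)^r (1 + O(x^-2)). *)
Definition ratio_shift (r : R) := (r - 1) / 2.

Definition ratio_log_error (r x : R) := ln (gamma_ratio r x) - r * ln (x + ratio_shift r).

Definition ratio_log_step (r y : R) :=
  ln (1 + r / y) - r * ln (1 + 1 / (y + ratio_shift r)).

Section GammaRatio.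
Variable r : R.
Hypothesis Hr : 0 < r <= 1.

Lemma ratio_shift_bounds : -1/2 < ratio_shift r <= 0.
Proof. unfold ratio_shift. lra. Qed.

Lemma gamma_ratio_pos x : 0 < x -> 0 < gamma_ratio r x.
Proof.
  intros Hx. apply Rdiv_lt_0_compat; apply Gamma_spec; lra.
Qed.

Lemma gamma_ratio_succ x : 0 < x -> gamma_ratio r (x + 1) = gamma_ratio r x * (1 + r / x).
Proof.
  intros Hx. unfold gamma_ratio.
  replace (x + 1 + r) with ((x + r) + 1) by ring.
  rewrite !Gamma_succ by lra.
  pose proof (proj2 (Gamma_spec x Hx)). field. lra.
Qed.

Lemma gamma_ratio_up x : 0 < x -> gamma_ratio r x <= Rpower x r.
Proof.
  intros Hx. pose proof (proj2 (Gamma_spec x Hx)).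
  apply Rle_div_l; [lra|]. apply Wendel_up; lra.
Qed.

Lemma gamma_ratio_low x : 0 < x -> x / Rpower (x + r) (1 - r) <= gamma_ratio r x.
Proof.
  intros Hx. pose proof (proj2 (Gamma_spec x Hx)).
  pose proof (Rpower_pos (x + r) (1 - r)).
  pose proof (Wendel_low x r Hx ltac:(lra)).
  unfold gamma_ratio. apply (Rle_div_r _ _ (Gamma x)); [lra|].
  replace (x / Rpower (x + r) (1 - r) * Gamma x) with (x * Gamma x / Rpower (x + r) (1 - r))
    by (field; lra).
  apply Rle_div_l; lra.
Qed.

Lemma ratio_log_error_succ x : 1 <= x ->
  ratio_log_error r (x + 1) = ratio_log_error r x + ratio_log_step r x.
Proof.
  intros Hx. pose proof ratio_shift_bounds. unfold ratio_log_error, ratio_log_step.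
  rewrite gamma_ratio_succ by lra.
  assert (0 < r / x) by (apply Rdiv_lt_0_compat; lra).
  assert (0 < 1 / (x + ratio_shift r)) by (apply Rdiv_lt_0_compat; lra).
  pose proof (gamma_ratio_pos x ltac:(lra)).
  rewrite ln_mult by lra.
  replace (x + 1 + ratio_shift r)
    with ((x + ratio_shift r) * (1 + 1 / (x + ratio_shift r))) by (field; lra).
  rewrite ln_mult by lra. ring.
Qed.

(* The second-order Taylor parts of the two logarithms in the step nearly cancel:
   what remains is -(r a^2/(y^2 z) + r a (2y + a)/(2 y^2 z^2)) with z = y + a, of size y^-3. *)
Lemma ratio_step_second_order y : 1 <= y ->
  let z := y + ratio_shift r in
  Rabs ((r / y - (r / y) ^ 2 / 2) - r * (1 / z - (1 / z) ^ 2 / 2)) <= 2 / y ^ 3.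
Proof.
  intros Hy z. pose proof ratio_shift_bounds as Ha. set (a := ratio_shift r) in *.
  assert (Hz : y / 2 <= z) by (unfold z; lra).
  assert (Hy2 : 0 < y ^ 2) by (apply pow_lt; lra).
  assert (Hy3 : 0 < y ^ 3) by (apply pow_lt; lra).
  assert (Hz2 : 0 < z ^ 2) by (apply pow_lt; lra).
  replace ((r / y - (r / y) ^ 2 / 2) - r * (1 / z - (1 / z) ^ 2 / 2))
    with (- (r * a ^ 2 / (y ^ 2 * z) + r * a * (2 * y + a) / (2 * y ^ 2 * z ^ 2))).
  2:{ unfold z. replace r with (2 * a + 1) by (unfold a, ratio_shift; field).
      field. split; lra. }
  assert (T1 : 0 <= r * a ^ 2 / (y ^ 2 * z) <= 1 / 2 / y ^ 3).
  { split; [apply Rdiv_le_0_compat; [nra | apply Rmult_lt_0_compat; nra]|].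
    apply Rmult_le_reg_r with (y ^ 3 * (y ^ 2 * z)); [apply Rmult_lt_0_compat; nra|].
    field_simplify; [| lra ..].
    assert (r * a ^ 2 <= 1/4) by nra.
    assert (y ^ 3 <= 2 * (y ^ 2 * z)) by (simpl; nra).
    nra. }
  assert (T2 : - (2 / y ^ 3) <= r * a * (2 * y + a) / (2 * y ^ 2 * z ^ 2) <= 0).
  { assert (0 < 2 * y ^ 2 * z ^ 2) by nra.
    assert (0 <= - (r * a) <= 1/2) by nra.
    assert (0 <= 2 * y + a <= 2 * y) by lra.
    split.
    - apply Rmult_le_reg_r with (y ^ 3 * (2 * y ^ 2 * z ^ 2)); [nra|].
      field_simplify; [| lra ..].
      assert (- (r * a) * (2 * y + a) <= y) by nra.
      assert (y ^ 2 <= 4 * z ^ 2) by nra.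
      nra.
    - apply Rmult_le_reg_r with (2 * y ^ 2 * z ^ 2); [lra|].
      field_simplify; [| lra ..].
      assert (0 <= r * (- a) * (a + 2 * y)) by (apply Rmult_le_pos; [apply Rmult_le_pos|]; lra).
      nra. }
  apply Rabs_le. split; lra.
Qed.

Lemma ratio_log_step_bound y : 1 <= y -> Rabs (ratio_log_step r y) <= 12 / y ^ 3.
Proof.
  intros Hy. pose proof ratio_shift_bounds as Ha.
  pose proof (ratio_step_second_order y Hy) as HE. cbv zeta in HE.
  set (z := y + ratio_shift r) in *.
  assert (Hz0 : y / 2 <= z) by (unfold z; lra).
  destruct (ln1p_bounds (r / y) ltac:(apply Rdiv_le_0_compat; lra)) as [L1 U1].
  destruct (ln1p_bounds (1 / z) ltac:(apply Rdiv_le_0_compat; lra)) as [L2 U2].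
  assert (C1 : (r / y) ^ 3 <= 1 / y ^ 3).
  { replace ((r / y) ^ 3) with (r ^ 3 / y ^ 3) by (field; lra).
    unfold Rdiv. apply Rmult_le_compat_r; [left; apply Rinv_0_lt_compat, pow_lt; lra|].
    rewrite <- (pow1 3). apply pow_incr; lra. }
  assert (C2 : (1 / z) ^ 3 <= 8 / y ^ 3).
  { replace ((1 / z) ^ 3) with (1 / z ^ 3) by (field; lra).
    apply Rmult_le_reg_r with (y ^ 3 * z ^ 3); [apply Rmult_lt_0_compat; apply pow_lt; lra|].
    field_simplify; [| lra ..].
    replace 8 with (2 ^ 3) by ring. rewrite <- Rpow_mult_distr. apply pow_incr; lra. }
  set (w := 1 / y ^ 3) in *.
  replace (12 / y ^ 3) with (12 * w) by (unfold w; field; lra).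
  replace (2 / y ^ 3) with (2 * w) in HE by (unfold w; field; lra).
  replace (8 / y ^ 3) with (8 * w) in C2 by (unfold w; field; lra).
  unfold ratio_log_step. fold z.
  assert (0 <= r * (ln (1 + 1 / z) - (1 / z - (1 / z) ^ 2 / 2)) <= 8 * w).
  { split; [apply Rmult_le_pos; lra|].
    assert (r * (ln (1 + 1 / z) - (1 / z - (1 / z) ^ 2 / 2))
            <= 1 * (ln (1 + 1 / z) - (1 / z - (1 / z) ^ 2 / 2)))
      by (apply Rmult_le_compat_r; lra).
    lra. }
  set (A := ln (1 + r / y)) in *. set (B := ln (1 + 1 / z)) in *.
  set (E := (r / y - (r / y) ^ 2 / 2) - r * (1 / z - (1 / z) ^ 2 / 2)) in *.
  assert (A - r * B = E + (A - (r / y - (r / y) ^ 2 / 2))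
                      - r * (B - (1 / z - (1 / z) ^ 2 / 2))) by (unfold E; ring).
  apply Rabs_le_between in HE. apply Rabs_le. split; lra.
Qed.
End GammaRatio.

Section RatioAsymptotics.
Variable r : R.
Hypothesis Hr : 0 < r <= 1.

Lemma ratio_log_terms x : 1 <= x ->
  - (1 / x) <= ln (1 + ratio_shift r / x) <= 0 /\ 0 <= ln (1 + r / x) <= 1 / x.
Proof.
  intros Hx. pose proof (ratio_shift_bounds r Hr) as Ha. set (a := ratio_shift r) in *.
  assert (Hix : 0 < 1 / x <= 1) by (split; [apply Rdiv_lt_0_compat | apply Rle_div_l]; lra).
  replace (a / x) with (a * (1 / x)) by (field; lra).
  replace (r / x) with (r * (1 / x)) by (field; lra).
  assert (Hu : - (1/2) < a * (1 / x) <= 0) by nra.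
  repeat split.
  - eapply Rle_trans; [| apply ln1p_ge; lra].
    apply (Rle_div_r (- (1 / x)) _ (1 + a * (1 / x))); [lra|]. nra.
  - pose proof (ln1p_le (a * (1 / x))). lra.
  - rewrite <- ln_1. apply ln_le; nra.
  - pose proof (ln1p_le (r * (1 / x))). nra.
Qed.

(* A crude bound |L_r(x)| <= 1/x from Wendel's inequalities. *)
Lemma ratio_log_error_crude x : 1 <= x -> Rabs (ratio_log_error r x) <= 1 / x.
Proof.
  intros Hx. pose proof (ratio_shift_bounds r Hr) as Ha. set (a := ratio_shift r) in *.
  destruct (ratio_log_terms x Hx) as [Hla Hlr]. fold a in Hla.
  pose proof (gamma_ratio_pos r Hr x ltac:(lra)) as Hh.
  assert (Hup : ln (gamma_ratio r x) <= r * ln x).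
  { rewrite <- ln_Rpower by lra. apply ln_le; [auto | apply gamma_ratio_up; lra]. }
  assert (Hlow : ln x - (1 - r) * ln (x + r) <= ln (gamma_ratio r x)).
  { pose proof (Rpower_pos (x + r) (1 - r)).
    replace (ln x - (1 - r) * ln (x + r)) with (ln (x / Rpower (x + r) (1 - r))).
    - apply ln_le; [apply Rdiv_lt_0_compat; lra | apply gamma_ratio_low; lra].
    - unfold Rdiv. rewrite ln_mult, ln_Rinv, ln_Rpower; try lra.
      apply Rinv_0_lt_compat; lra. }
  assert (Ea : ln (x + a) = ln x + ln (1 + a / x)).
  { replace (1 + a / x) with ((x + a) / x) by (field; lra).
    rewrite <- ln_mult by (try apply Rdiv_lt_0_compat; lra). f_equal. field. lra. }
  assert (Er : ln (x + r) = ln x + ln (1 + r / x)).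
  { replace (1 + r / x) with ((x + r) / x) by (field; lra).
    rewrite <- ln_mult by (try apply Rdiv_lt_0_compat; lra). f_equal. field. lra. }
  unfold ratio_log_error. fold a. rewrite Ea. rewrite Er in Hlow.
  apply Rabs_le. split; nra.
Qed.

Lemma gamma_ratio_repr x : 0 < x ->
  gamma_ratio r x = exp (ratio_log_error r x) * Rpower (x + ratio_shift r) r.
Proof.
  intros Hx. pose proof (gamma_ratio_pos r Hr x Hx).
  unfold ratio_log_error, Rpower. rewrite <- exp_plus.
  set (l := r * ln (x + ratio_shift r)).
  replace (ln (gamma_ratio r x) - l + l) with (ln (gamma_ratio r x)) by ring.
  now rewrite exp_ln.
Qed.

Lemma telescoping_majorant y : 1 <= y ->
  1 / y ^ 3 <= 1 / (2 * (y - 1/2) ^ 2) - 1 / (2 * (y + 1 - 1/2) ^ 2).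
Proof.
  intros Hy.
  replace (1 / (2 * (y - 1/2) ^ 2) - 1 / (2 * (y + 1 - 1/2) ^ 2))
    with (y / ((y - 1/2) ^ 2 * (y + 1/2) ^ 2)) by (field; lra).
  apply Rmult_le_reg_r with (y ^ 3 * ((y - 1/2) ^ 2 * (y + 1/2) ^ 2)).
  { apply Rmult_lt_0_compat; [| apply Rmult_lt_0_compat]; apply pow_lt; lra. }
  field_simplify; [nra | lra ..].
Qed.

Lemma ratio_log_error_telescope x (k : nat) : 1 <= x ->
  Rabs (ratio_log_error r x - ratio_log_error r (x + INR k))
  <= 12 * (1 / (2 * (x - 1/2) ^ 2) - 1 / (2 * (x + INR k - 1/2) ^ 2)).
Proof.
  intros Hx. induction k as [|k IH].
  - rewrite Rplus_0_r, Rminus_diag, Rabs_R0. lra.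
  - rewrite S_INR. replace (x + (INR k + 1)) with ((x + INR k) + 1) by ring.
    pose proof (pos_INR k).
    rewrite ratio_log_error_succ by lra.
    pose proof (ratio_log_step_bound r Hr (x + INR k) ltac:(lra)) as Hd.
    pose proof (telescoping_majorant (x + INR k) ltac:(lra)).
    replace (12 / (x + INR k) ^ 3) with (12 * (1 / (x + INR k) ^ 3)) in Hd by (field; lra).
    replace (ratio_log_error r x - (ratio_log_error r (x + INR k) + ratio_log_step r (x + INR k)))
      with ((ratio_log_error r x - ratio_log_error r (x + INR k)) - ratio_log_step r (x + INR k))
      by ring.
    eapply Rle_trans; [apply Rabs_triang|]. rewrite Rabs_Ropp. lra.
Qed.

(* Since L_r(x + k) -> 0 as k -> oo, the telescoped bound gives |L_r(x)| = O(x^-2). *)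
Lemma ratio_log_error_bound x : 1 <= x -> Rabs (ratio_log_error r x) <= 24 / x ^ 2.
Proof.
  intros Hx.
  assert (HT : 12 * (1 / (2 * (x - 1/2) ^ 2)) <= 24 / x ^ 2).
  { apply Rmult_le_reg_r with ((x - 1/2) ^ 2 * x ^ 2); [apply Rmult_lt_0_compat; apply pow_lt; lra|].
    field_simplify; [nra | lra ..]. }
  eapply Rle_trans; [|exact HT].
  set (T := 12 * (1 / (2 * (x - 1 / 2) ^ 2))).
  assert (Hk : forall k : nat, Rabs (ratio_log_error r x) <= T + / (x + INR k)).
  { intros k. pose proof (pos_INR k).
    pose proof (ratio_log_error_telescope x k Hx) as H1.
    pose proof (ratio_log_error_crude (x + INR k) ltac:(lra)) as H2.
    assert (0 <= 1 / (2 * (x + INR k - 1 / 2) ^ 2)).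
    { apply Rdiv_le_0_compat; [lra|]. assert (0 < (x + INR k - 1/2) ^ 2) by (apply pow_lt; lra). lra. }
    pose proof (Rabs_triang (ratio_log_error r x - ratio_log_error r (x + INR k))
                            (ratio_log_error r (x + INR k))) as Htri.
    replace (ratio_log_error r x - ratio_log_error r (x + INR k) + ratio_log_error r (x + INR k))
      with (ratio_log_error r x) in Htri by ring.
    unfold T, Rdiv in *. lra. }
  assert (Hlim : is_lim_seq (fun k => T + / (x + INR k)) (T + 0)).
  { apply is_lim_seq_plus'; [apply is_lim_seq_const|].
    replace (Finite 0) with (Rbar_inv p_infty) by reflexivity.
    apply is_lim_seq_inv; [|discriminate].
    apply (is_lim_seq_plus _ _ x p_infty);
      [apply is_lim_seq_const | apply is_lim_seq_INR | reflexivity]. }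
  rewrite Rplus_0_r in Hlim.
  apply (is_lim_seq_le (fun _ => Rabs (ratio_log_error r x)) _ _ _ Hk (is_lim_seq_const _) Hlim).
Qed.
End RatioAsymptotics.

(** * Taylor expansion of y^r at y = 1 *)

(* Derivative of c * t^e + g(t), in the shape needed by the Taylor remainders below. *)
Lemma rpow_affine_derive (f : R -> R) (c e L : R) (g : R -> R) (dg : R) t : 0 < t ->
  (forall u, f u = c * Rpower u e + g u) -> is_derive g t dg ->
  L = c * (e * Rpower t (e - 1)) + dg -> is_derive f t L.
Proof.
  intros Ht Hf Hg HL. apply (is_derive_ext (fun u => c * Rpower u e + g u));
    [intros; symmetry; apply Hf|].
  rewrite HL. apply (is_derive_plus (fun u => c * Rpower u e) g); [|exact Hg].
  apply is_derive_scal. now apply Rpower_derive.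
Qed.

Definition rpow_taylor3 r y :=
  1 + r * (y - 1) + r * (r - 1) / 2 * (y - 1) ^ 2 + r * (r - 1) * (r - 2) / 6 * (y - 1) ^ 3.

(* On [1/2, +oo) the fourth derivative of y^r, 0 < r <= 1, is bounded by 6 * 2^4. *)
Definition taylor_const := 6 * exp (4 * ln 2).

Lemma taylor_const_nonneg : 0 <= taylor_const.
Proof. unfold taylor_const. pose proof (exp_pos (4 * ln 2)). lra. Qed.

Lemma rpow_neg_bound t c : 1/2 <= t -> -4 <= c <= 0 -> Rpower t c <= exp (4 * ln 2).
Proof.
  intros Ht Hc. unfold Rpower. apply exp_le.
  assert (- ln 2 <= ln t) by (rewrite <- ln_Rinv by lra; apply ln_le; lra).
  assert (0 < ln 2) by (rewrite <- ln_1; apply ln_increasing; lra).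
  destruct (Rle_or_lt 0 (ln t)); nra.
Qed.

Section Taylor.
Variable r : R.
Hypothesis Hr : 0 < r <= 1.

(* The remainders of the Taylor expansions of y^r and of its first three
   derivatives; each is the derivative of the previous one. *)
Definition taylor_rem3 t := r * (r - 1) * (r - 2) * Rpower t (r - 3) - r * (r - 1) * (r - 2).
Definition taylor_rem2 t :=
  r * (r - 1) * Rpower t (r - 2) - (r * (r - 1) + r * (r - 1) * (r - 2) * (t - 1)).
Definition taylor_rem1 t :=
  r * Rpower t (r - 1)
  - (r + r * (r - 1) * (t - 1) + r * (r - 1) * (r - 2) / 2 * (t - 1) ^ 2).
Definition taylor_rem0 t := Rpower t r - rpow_taylor3 r t.

(* Bounds |R_k(y)| <= taylor_const |y - 1|^(4-k) for y >= 1/2, from R_3 down to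
   R_0 by integrating the previous bound (mvt_pow_bound). *)
Lemma taylor_rem3_bound y : 1/2 <= y -> Rabs (taylor_rem3 y) <= taylor_const * Rabs (y - 1) ^ 1.
Proof.
  intros Hy.
  apply (mvt_pow_bound taylor_rem3 (fun t => r * (r - 1) * (r - 2) * ((r - 3) * Rpower t (r - 3 - 1)))
           taylor_const 0 (1/2) (y + 1)); try lra; [apply taylor_const_nonneg | | |].
  - unfold taylor_rem3. rewrite Rpower_1_base. ring.
  - intros t Ht.
    apply (rpow_affine_derive _ (r * (r - 1) * (r - 2)) (r - 3) _ (fun _ => - (r * (r - 1) * (r - 2))) 0);
      [lra | intros u; unfold taylor_rem3; ring | auto_derive; auto | ring].
  - intros t Ht. simpl. rewrite Rmult_1_r.
    replace (r * (r - 1) * (r - 2) * ((r - 3) * Rpower t (r - 3 - 1)))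
      with ((r * (r - 1) * (r - 2) * (r - 3)) * Rpower t (r - 4)) by (replace (r - 3 - 1) with (r - 4) by ring; ring).
    rewrite Rabs_mult, (Rabs_pos_eq (Rpower t (r - 4))) by (left; apply Rpower_pos).
    unfold taylor_const. apply Rmult_le_compat; [apply Rabs_pos | left; apply Rpower_pos | |
                                                 apply rpow_neg_bound; lra].
    rewrite !Rabs_mult.
    rewrite (Rabs_pos_eq r), (Rabs_left1 (r - 1)), (Rabs_left1 (r - 2)), (Rabs_left1 (r - 3)) by lra.
    assert (r * - (r - 1) <= 1) by nra.
    assert (0 <= r * - (r - 1)) by nra.
    assert (r * - (r - 1) * - (r - 2) <= 2) by nra.
    nra.
Qed.

Lemma taylor_rem2_bound y : 1/2 <= y -> Rabs (taylor_rem2 y) <= taylor_const * Rabs (y - 1) ^ 2.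
Proof.
  intros Hy.
  apply (mvt_pow_bound taylor_rem2 taylor_rem3 taylor_const 1 (1/2) (y + 1));
    try lra; [apply taylor_const_nonneg | | | intros t Ht; apply taylor_rem3_bound; lra].
  - unfold taylor_rem2. rewrite Rpower_1_base. ring.
  - intros t Ht.
    apply (rpow_affine_derive _ (r * (r - 1)) (r - 2) _
             (fun u => - (r * (r - 1) + r * (r - 1) * (r - 2) * (u - 1))) (- (r * (r - 1) * (r - 2))));
      [lra | intros u; unfold taylor_rem2; ring | auto_derive; auto; ring |].
    unfold taylor_rem3. replace (r - 2 - 1) with (r - 3) by ring. ring.
Qed.

Lemma taylor_rem1_bound y : 1/2 <= y -> Rabs (taylor_rem1 y) <= taylor_const * Rabs (y - 1) ^ 3.
Proof.
  intros Hy.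
  apply (mvt_pow_bound taylor_rem1 taylor_rem2 taylor_const 2 (1/2) (y + 1));
    try lra; [apply taylor_const_nonneg | | | intros t Ht; apply taylor_rem2_bound; lra].
  - unfold taylor_rem1. rewrite Rpower_1_base. ring.
  - intros t Ht.
    apply (rpow_affine_derive _ r (r - 1) _
             (fun u => - (r + r * (r - 1) * (u - 1) + r * (r - 1) * (r - 2) / 2 * (u - 1) ^ 2))
             (- (r * (r - 1) + r * (r - 1) * (r - 2) * (t - 1))));
      [lra | intros u; unfold taylor_rem1; ring | auto_derive; auto; field |].
    unfold taylor_rem2. replace (r - 1 - 1) with (r - 2) by ring. ring.
Qed.

Lemma taylor_rem0_bound y : 1/2 <= y -> Rabs (taylor_rem0 y) <= taylor_const * Rabs (y - 1) ^ 4.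
Proof.
  intros Hy.
  apply (mvt_pow_bound taylor_rem0 taylor_rem1 taylor_const 3 (1/2) (y + 1));
    try lra; [apply taylor_const_nonneg | | | intros t Ht; apply taylor_rem1_bound; lra].
  - unfold taylor_rem0, rpow_taylor3. rewrite Rpower_1_base. ring.
  - intros t Ht.
    apply (rpow_affine_derive _ 1 r _ (fun u => - rpow_taylor3 r u)
             (- (r + r * (r - 1) * (t - 1) + r * (r - 1) * (r - 2) / 2 * (t - 1) ^ 2)));
      [lra | intros u; unfold taylor_rem0; ring | unfold rpow_taylor3; auto_derive; auto; field |].
    unfold taylor_rem1. ring.
Qed.

(* On [-1/2, 1/2], where the derivative bounds are unavailable, P3 stays bounded by 4. *)
Lemma rpow_taylor3_small y : -1/2 <= y <= 1/2 -> Rabs (rpow_taylor3 r y) <= 4.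
Proof.
  intros Hy. unfold rpow_taylor3. set (w := y - 1).
  assert (-3/2 <= w <= -1/2) by (unfold w; lra).
  assert (-3/2 <= r * w <= 0) by (split; nra).
  assert (-1 <= r * (r - 1) / 2 <= 0) by (split; nra).
  assert (0 <= w ^ 2 <= 9/4) by (split; nra).
  assert (-9/4 <= r * (r - 1) / 2 * w ^ 2 <= 0) by (split; nra).
  assert (0 <= r * (r - 1) * (r - 2) / 6 <= 1/3) by (split; nra).
  assert (-27/8 <= w ^ 3 <= 0) by (split; nra).
  assert (-9/8 <= r * (r - 1) * (r - 2) / 6 * w ^ 3 <= 0) by (split; nra).
  apply Rabs_le. split; lra.
Qed.

Definition taylor_global_const := taylor_const + 80.

Lemma rpow_taylor3_error y : 0 < y ->
  Rabs (Rpower y r - rpow_taylor3 r y) <= taylor_global_const * (y - 1) ^ 4.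
Proof.
  intros Hy. unfold taylor_global_const. pose proof taylor_const_nonneg.
  assert (H4 : 0 <= (y - 1) ^ 4)
    by (replace ((y - 1) ^ 4) with (((y - 1) ^ 2) ^ 2) by ring; apply pow2_ge_0).
  destruct (Rle_or_lt (1/2) y) as [Hy2|Hy2].
  - pose proof (taylor_rem0_bound y Hy2) as Hb. unfold taylor_rem0 in Hb.
    rewrite RPow_abs, (Rabs_pos_eq ((y - 1) ^ 4)) in Hb by exact H4. nra.
  - assert (Rpower y r <= 1).
    { unfold Rpower. rewrite <- exp_0. apply exp_le.
      assert (ln y < 0) by (rewrite <- ln_1; apply ln_increasing; lra). nra. }
    pose proof (Rpower_pos y r).
    assert (1/16 <= (y - 1) ^ 4).
    { replace ((y - 1) ^ 4) with (((1 - y) ^ 2) ^ 2) by ring.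
      replace (1/16) with ((1/4) ^ 2) by field. apply pow_incr. split; [lra|].
      replace (1/4) with ((1/2) ^ 2) by field. apply pow_incr. lra. }
    pose proof (rpow_taylor3_small y ltac:(lra)) as Hsmall.
    apply Rabs_le_between in Hsmall. apply Rabs_le. split; nra.
Qed.
End Taylor.

(** * Averages against the binomial distribution Bin(d, 1/2) *)

Definition binom_sum (d : nat) (f : nat -> R) := sum_f_R0 (fun n => Binomial.C d n * f n) d.
Definition binom_mean (d : nat) (f : nat -> R) := binom_sum d f / 2 ^ d.

Lemma binom_C_n_0 n : Binomial.C n 0 = 1.
Proof. unfold Binomial.C. rewrite Nat.sub_0_r. simpl. field. apply INR_fact_neq_0. Qed.

Lemma binom_C_n_n n : Binomial.C n n = 1.
Proof. unfold Binomial.C. rewrite Nat.sub_diag. simpl. field. apply INR_fact_neq_0. Qed.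

Lemma binom_C_pos n k : 0 < Binomial.C n k.
Proof.
  unfold Binomial.C. apply Rdiv_lt_0_compat; [apply INR_fact_lt_0|].
  apply Rmult_lt_0_compat; apply INR_fact_lt_0.
Qed.

(* Pascal's rule, summed: the law of N_(d+1) is that of N_d + B with B ~ Bernoulli(1/2). *)
Lemma binom_sum_succ d f : binom_sum (S d) f = binom_sum d f + binom_sum d (fun n => f (S n)).
Proof.
  unfold binom_sum. destruct d as [|d].
  - simpl. rewrite !binom_C_n_0, binom_C_n_n. ring.
  - rewrite tech5, binom_C_n_n.
    rewrite (decomp_sum _ (S d)) by lia. simpl pred.
    rewrite (decomp_sum (fun n => Binomial.C (S d) n * f n) (S d)) by lia. simpl pred.
    rewrite (tech5 (fun n => Binomial.C (S d) n * f (S n)) d), binom_C_n_n, !binom_C_n_0.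
    rewrite (sum_eq (fun i => Binomial.C (S (S d)) (S i) * f (S i))
                    (fun i => Binomial.C (S d) i * f (S i) + Binomial.C (S d) (S i) * f (S i))).
    2:{ intros i Hi. rewrite <- pascal by lia. ring. }
    rewrite sum_plus. ring.
Qed.

Lemma binom_mean_succ d f :
  binom_mean (S d) f = (binom_mean d f + binom_mean d (fun n => f (S n))) / 2.
Proof. unfold binom_mean. rewrite binom_sum_succ. simpl. field. apply pow_nonzero. lra. Qed.

Lemma binom_mean_ext d f g : (forall n, (n <= d)%nat -> f n = g n) ->
  binom_mean d f = binom_mean d g.
Proof. intros H. unfold binom_mean, binom_sum. f_equal. apply sum_eq. intros i Hi. rewrite H; auto. Qed.

Lemma binom_mean_plus d f g :
  binom_mean d (fun n => f n + g n) = binom_mean d f + binom_mean d g.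
Proof.
  unfold binom_mean, binom_sum. rewrite <- Rdiv_plus_distr. f_equal.
  rewrite <- sum_plus. apply sum_eq. intros; ring.
Qed.

Lemma binom_mean_scal d c f : binom_mean d (fun n => c * f n) = c * binom_mean d f.
Proof.
  unfold binom_mean, binom_sum, Rdiv. rewrite <- Rmult_assoc. f_equal.
  rewrite scal_sum. apply sum_eq. intros; ring.
Qed.

Lemma binom_mean_le d f g : (forall n, (n <= d)%nat -> f n <= g n) ->
  binom_mean d f <= binom_mean d g.
Proof.
  intros H. unfold binom_mean. apply Rmult_le_compat_r; [left; apply Rinv_0_lt_compat, pow_lt; lra|].
  apply sum_Rle. intros n Hn. apply Rmult_le_compat_l; [left; apply binom_C_pos | auto].
Qed.

Lemma binom_mean_abs_le d f g : (forall n, (n <= d)%nat -> Rabs (f n) <= g n) ->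
  Rabs (binom_mean d f) <= binom_mean d g.
Proof.
  intros H. apply Rabs_le. split.
  - replace (- binom_mean d g) with (binom_mean d (fun n => -1 * g n)) by (rewrite binom_mean_scal; ring).
    apply binom_mean_le. intros n Hn. specialize (H n Hn). apply Rabs_le_between in H. lra.
  - apply binom_mean_le. intros n Hn. specialize (H n Hn). apply Rabs_le_between in H. lra.
Qed.

Lemma binom_mean_const d c : binom_mean d (fun _ => c) = c.
Proof.
  induction d as [|d IH].
  - unfold binom_mean, binom_sum. simpl. rewrite binom_C_n_0. field.
  - rewrite binom_mean_succ, IH. field.
Qed.

Lemma binom_moment1 d : binom_mean d INR = INR d / 2.
Proof.
  induction d as [|d IH]; [unfold binom_mean, binom_sum; simpl; field|].
  rewrite binom_mean_succ, (binom_mean_ext d (fun n => INR (S n)) (fun n => INR n + 1))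
    by (intros; rewrite S_INR; ring).
  rewrite binom_mean_plus, binom_mean_const, IH, S_INR. field.
Qed.

Lemma binom_moment2 d : binom_mean d (fun n => INR n ^ 2) = INR d * (INR d + 1) / 4.
Proof.
  induction d as [|d IH]; [unfold binom_mean, binom_sum; simpl; field|].
  rewrite binom_mean_succ,
    (binom_mean_ext d (fun n => INR (S n) ^ 2) (fun n => INR n ^ 2 + (2 * INR n + 1)))
    by (intros; rewrite S_INR; ring).
  rewrite binom_mean_plus, (binom_mean_plus d (fun n => 2 * INR n)), binom_mean_scal,
    binom_mean_const, IH, binom_moment1, S_INR. field.
Qed.

Lemma binom_moment3 d : binom_mean d (fun n => INR n ^ 3) = INR d ^ 2 * (INR d + 3) / 8.
Proof.
  induction d as [|d IH]; [unfold binom_mean, binom_sum; simpl; field|].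
  rewrite binom_mean_succ, (binom_mean_ext d (fun n => INR (S n) ^ 3)
    (fun n => INR n ^ 3 + (3 * INR n ^ 2 + (3 * INR n + 1)))) by (intros; rewrite S_INR; ring).
  rewrite binom_mean_plus, (binom_mean_plus d (fun n => 3 * INR n ^ 2)),
    (binom_mean_plus d (fun n => 3 * INR n)), !binom_mean_scal, binom_mean_const, IH,
    binom_moment1, binom_moment2, S_INR. field.
Qed.

Lemma binom_moment4 d :
  binom_mean d (fun n => INR n ^ 4) = INR d * (INR d + 1) * (INR d ^ 2 + 5 * INR d - 2) / 16.
Proof.
  induction d as [|d IH]; [unfold binom_mean, binom_sum; simpl; field|].
  rewrite binom_mean_succ, (binom_mean_ext d (fun n => INR (S n) ^ 4)
    (fun n => INR n ^ 4 + (4 * INR n ^ 3 + (6 * INR n ^ 2 + (4 * INR n + 1)))))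
    by (intros; rewrite S_INR; ring).
  rewrite binom_mean_plus, (binom_mean_plus d (fun n => 4 * INR n ^ 3)),
    (binom_mean_plus d (fun n => 6 * INR n ^ 2)), (binom_mean_plus d (fun n => 4 * INR n)),
    !binom_mean_scal, binom_mean_const, IH, binom_moment1, binom_moment2, binom_moment3, S_INR.
  field.
Qed.

Lemma binom_mean_centered_quartic d c0 c1 c2 c3 c4 :
  binom_mean d (fun n => c0 + c1 * (INR n - INR d / 2) + c2 * (INR n - INR d / 2) ^ 2
                 + c3 * (INR n - INR d / 2) ^ 3 + c4 * (INR n - INR d / 2) ^ 4)
  = c0 + c2 * (INR d / 4) + c4 * (INR d * (3 * INR d - 2) / 16).
Proof.
  set (D := INR d).
  set (b0 := c0 - c1 * D / 2 + c2 * D ^ 2 / 4 - c3 * D ^ 3 / 8 + c4 * D ^ 4 / 16).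
  set (b1 := c1 - c2 * D + 3 * c3 * D ^ 2 / 4 - 4 * c4 * D ^ 3 / 8).
  set (b2 := c2 - 3 * c3 * D / 2 + 6 * c4 * D ^ 2 / 4).
  set (b3 := c3 - 2 * c4 * D).
  rewrite (binom_mean_ext d _
    (fun n => b0 + b1 * INR n + b2 * INR n ^ 2 + b3 * INR n ^ 3 + c4 * INR n ^ 4))
    by (intros n Hn; unfold b0, b1, b2, b3; field).
  rewrite !binom_mean_plus, !binom_mean_scal, binom_mean_const, binom_moment1, binom_moment2,
    binom_moment3, binom_moment4.
  fold D. unfold b0, b1, b2, b3. field.
Qed.

(** * The normalized sum S_d *)

(* Rescaled index Y_d(n) = 2 (n + r - 1)/d, concentrated near 1 when N ~ Bin(d, 1/2). *)
Definition scaled_index (r : R) (d n : nat) := 2 * (INR n + r - 1) / INR d.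

(* The n-th summand of I_0, normalized: (2/d)^r 2^r Gamma(n/2 + r)/Gamma(n/2);
   the n = 0 term is absent from I_0. *)
Definition summand (r : R) (d n : nat) :=
  match n with
  | O => 0
  | S _ => Rpower (2 / INR d) r * (Rpower 2 r * gamma_ratio r (INR n / 2))
  end.

Lemma pow4_nonneg x : 0 <= x ^ 4.
Proof. replace (x ^ 4) with ((x ^ 2) ^ 2) by ring. apply pow2_ge_0. Qed.

Lemma Rpower_le_1 y r : 0 < y <= 1 -> 0 < r -> Rpower y r <= 1.
Proof.
  intros Hy Hr. unfold Rpower. rewrite <- exp_0. apply exp_le.
  assert (ln y <= 0) by (rewrite <- ln_1; apply ln_le; lra). nra.
Qed.

Lemma Rpower_le_1p y r : 0 < y -> 0 < r <= 1 -> Rpower y r <= 1 + y.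
Proof.
  intros Hy Hr. destruct (Rle_or_lt y 1) as [H|H].
  - pose proof (Rpower_le_1 y r ltac:(lra) ltac:(lra)). lra.
  - assert (Rpower y r <= Rpower y 1) by (apply Rle_Rpower; lra).
    rewrite Rpower_1 in H0 by lra. lra.
Qed.

Section Summands.
Variable r : R.
Hypothesis Hr : 0 < r <= 1.

Lemma summand_repr d n : 0 < INR d -> (2 <= n)%nat ->
  summand r d n = Rpower (scaled_index r d n) r * exp (ratio_log_error r (INR n / 2)).
Proof.
  intros Hd Hn. assert (Hn2 : 2 <= INR n) by (apply (le_INR 2); auto).
  pose proof (ratio_shift_bounds r Hr).
  destruct n as [|n]; [lia|]. unfold summand. fold (INR (S n)).
  rewrite gamma_ratio_repr by lra.
  replace (scaled_index r d (S n)) with ((2 / INR d) * 2 * (INR (S n) / 2 + ratio_shift r))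
    by (unfold scaled_index, ratio_shift; field; lra).
  assert (0 < 2 / INR d) by (apply Rdiv_lt_0_compat; lra).
  rewrite <- !Rpower_mult_distr by (try apply Rmult_lt_0_compat; lra). ring.
Qed.

Lemma scaled_index_ge d n : 4 <= INR d -> -1/2 <= scaled_index r d n.
Proof.
  intros Hd. unfold scaled_index. pose proof (pos_INR n).
  apply (Rle_div_r (-1/2)); lra.
Qed.

Lemma scaled_index_pos d n : 0 < INR d -> (1 <= n)%nat -> 0 < scaled_index r d n.
Proof.
  intros Hd Hn. apply (le_INR 1) in Hn. simpl in Hn.
  unfold scaled_index. apply Rdiv_lt_0_compat; lra.
Qed.

(* The error of the Taylor model of the summand is controlled by
   g_d(n) = (1 + Y)/d^2 + (n - d/2)^4/d^4 + (Y - 1)^4, whose mean is O(d^-2). *)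
Definition error_majorant (d n : nat) :=
  (1 + scaled_index r d n) / INR d ^ 2 + (INR n - INR d / 2) ^ 4 / INR d ^ 4
  + (scaled_index r d n - 1) ^ 4.

Lemma error_majorant_parts d n : 4 <= INR d ->
  0 <= (1 + scaled_index r d n) / INR d ^ 2 /\ 0 <= (INR n - INR d / 2) ^ 4 / INR d ^ 4
  /\ 0 <= (scaled_index r d n - 1) ^ 4.
Proof.
  intros Hd. pose proof (scaled_index_ge d n Hd).
  repeat split; [apply Rdiv_le_0_compat; [lra | apply pow_lt; lra]
                | apply Rdiv_le_0_compat; [apply pow4_nonneg | apply pow_lt; lra]
                | apply pow4_nonneg].
Qed.

Lemma far_index_weight d (x : R) : 4 <= INR d -> x <= INR d / 4 ->
  1 <= 256 * ((x - INR d / 2) ^ 4 / INR d ^ 4).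
Proof.
  intros Hd Hx.
  assert ((INR d / 4) ^ 4 <= (x - INR d / 2) ^ 4).
  { replace ((x - INR d / 2) ^ 4) with ((INR d / 2 - x) ^ 4) by ring. apply pow_incr. lra. }
  apply (Rmult_le_reg_r (INR d ^ 4)); [apply pow_lt; lra|].
  replace (256 * ((x - INR d / 2) ^ 4 / INR d ^ 4) * INR d ^ 4) with (256 * (x - INR d / 2) ^ 4)
    by (field; lra).
  replace ((INR d / 4) ^ 4) with (INR d ^ 4 / 256) in H by field. lra.
Qed.

Lemma rpow_index_over_square d n : 4 <= INR d -> (1 <= n)%nat ->
  Rpower (scaled_index r d n) r / INR n ^ 2
  <= 16 * ((1 + scaled_index r d n) / INR d ^ 2) + 256 * ((INR n - INR d / 2) ^ 4 / INR d ^ 4).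
Proof.
  intros Hd Hn. assert (Hn1 : 1 <= INR n) by (apply (le_INR 1); auto).
  pose proof (scaled_index_pos d n ltac:(lra) Hn) as HY.
  destruct (error_majorant_parts d n Hd) as [P1 [P2 _]].
  assert (Hn2 : 1 <= INR n ^ 2) by (rewrite <- (pow1 2); apply pow_incr; lra).
  destruct (Rle_or_lt (INR d / 4) (INR n)) as [H|H].
  - pose proof (Rpower_le_1p (scaled_index r d n) r HY Hr).
    assert (INR d ^ 2 <= 16 * INR n ^ 2).
    { replace 16 with (4 ^ 2) by ring. rewrite <- Rpow_mult_distr. apply pow_incr. lra. }
    apply Rle_trans with (16 * ((1 + scaled_index r d n) / INR d ^ 2)); [|lra].
    apply Rle_div_l; [lra|].
    replace (16 * ((1 + scaled_index r d n) / INR d ^ 2) * INR n ^ 2)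
      with ((1 + scaled_index r d n) * (16 * INR n ^ 2 / INR d ^ 2)) by (field; lra).
    assert (1 <= 16 * INR n ^ 2 / INR d ^ 2) by (apply Rle_div_r; [apply pow_lt|]; lra).
    nra.
  - assert (scaled_index r d n <= 1) by (unfold scaled_index; apply Rle_div_l; lra).
    pose proof (Rpower_le_1 (scaled_index r d n) r ltac:(lra) ltac:(lra)).
    pose proof (far_index_weight d (INR n) Hd ltac:(lra)).
    assert (Rpower (scaled_index r d n) r / INR n ^ 2 <= 1) by (apply Rle_div_l; lra).
    lra.
Qed.

(* The summand at n = 1 lies in [0, 1] (Wendel at x = 1/2). *)
Lemma summand_one_bound d : 4 <= INR d -> 0 <= summand r d 1 <= 1.
Proof.
  intros Hd. unfold summand. simpl INR.
  pose proof (gamma_ratio_pos r Hr (1 / 2) ltac:(lra)).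
  pose proof (gamma_ratio_up r Hr (1 / 2) ltac:(lra)).
  pose proof (Rpower_pos 2 r). pose proof (Rpower_pos (2 / INR d) r).
  assert (Rpower 2 r * gamma_ratio r (1 / 2) <= 1).
  { assert (Rpower 2 r * Rpower (1 / 2) r = 1).
    { rewrite Rpower_mult_distr by lra. replace (2 * (1 / 2)) with 1 by field.
      apply Rpower_1_base. }
    nra. }
  assert (Rpower (2 / INR d) r <= 1).
  { apply Rpower_le_1; [split; [apply Rdiv_lt_0_compat | apply Rle_div_l] |]; lra. }
  split; [apply Rmult_le_pos; nra | nra].
Qed.

(* The constant 96 e^24 * 256 of summand_near_rpow (|L_r| <= 24 at n >= 2). *)
Definition summand_const := 96 * exp 24 * 256.

Lemma summand_near_rpow d n : 4 <= INR d -> (1 <= n)%nat ->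
  Rabs (summand r d n - Rpower (scaled_index r d n) r)
  <= summand_const * ((1 + scaled_index r d n) / INR d ^ 2 + (INR n - INR d / 2) ^ 4 / INR d ^ 4).
Proof.
  intros Hd Hn. destruct (error_majorant_parts d n Hd) as [P1 [P2 _]].
  pose proof (exp_pos 24). unfold summand_const.
  pose proof (Rpower_pos (scaled_index r d n) r) as HYr.
  destruct (Nat.eq_dec n 1) as [->|Hn1].
  - pose proof (summand_one_bound d Hd).
    assert (Rpower (scaled_index r d 1) r <= 1).
    { apply Rpower_le_1; [split | lra]; [apply scaled_index_pos; [lra | lia] |].
      unfold scaled_index. simpl INR. apply Rle_div_l; lra. }
    pose proof (far_index_weight d (INR 1) Hd ltac:(simpl; lra)).
    assert (1 <= exp 24) by (rewrite <- exp_0; apply exp_le; lra).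
    apply Rabs_le. split; nra.
  - assert (Hn2 : 2 <= INR n) by (apply (le_INR 2); lia).
    rewrite summand_repr by (lra || lia).
    set (L := ratio_log_error r (INR n / 2)).
    assert (HL : Rabs L <= 96 / INR n ^ 2).
    { eapply Rle_trans; [apply ratio_log_error_bound; lra|]. apply Req_le. field. lra. }
    assert (Rabs L <= 24).
    { eapply Rle_trans; [exact HL|]. apply Rle_div_l; [apply pow_lt; lra|]. simpl. nra. }
    assert (HE : Rabs (exp L - 1) <= 96 / INR n ^ 2 * exp 24).
    { eapply Rle_trans; [apply exp_m1_bound|].
      apply Rmult_le_compat; [apply Rabs_pos | left; apply exp_pos | auto | apply exp_le; auto]. }
    replace (Rpower (scaled_index r d n) r * exp L - Rpower (scaled_index r d n) r)
      with (Rpower (scaled_index r d n) r * (exp L - 1)) by ring.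
    rewrite Rabs_mult, (Rabs_pos_eq (Rpower _ _)) by lra.
    eapply Rle_trans; [apply Rmult_le_compat_l; [lra | exact HE]|].
    pose proof (rpow_index_over_square d n Hd ltac:(lia)) as Hk.
    replace (Rpower (scaled_index r d n) r * (96 / INR n ^ 2 * exp 24))
      with (96 * exp 24 * (Rpower (scaled_index r d n) r / INR n ^ 2)) by (field; lra).
    nra.
Qed.
End Summands.

Lemma inv_INR_lim : is_lim_seq (fun n => / INR n) 0.
Proof.
  replace (Finite 0) with (Rbar_inv p_infty) by reflexivity.
  apply is_lim_seq_inv; [apply is_lim_seq_INR | discriminate].
Qed.

Lemma inv_poly_lim a b c e :
  is_lim_seq (fun d => a + b / INR d + c / INR d ^ 2 + e / INR d ^ 3) a.
Proof.
  set (Q := fun t => a + b * t + c * t ^ 2 + e * t ^ 3).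
  apply is_lim_seq_ext_loc with (fun d => Q (/ INR d)).
  { exists 1%nat. intros n Hn. apply (le_INR 1) in Hn. simpl in Hn.
    unfold Q. field. lra. }
  replace (Finite a) with (Finite (Q 0)) by (unfold Q; f_equal; ring).
  apply is_lim_seq_continuous; [|exact inv_INR_lim].
  apply continuity_pt_filterlim, (ex_derive_continuous (K:=R_AbsRing) (V:=R_NormedModule)).
  unfold Q. auto_derive. auto.
Qed.

Lemma eventually_ge4 : eventually (fun n : nat => 4 <= INR n).
Proof. exists 4%nat. intros n Hn. apply (le_INR 4) in Hn. simpl in Hn. lra. Qed.

Section NormalizedSum.
Variable r : R.
Hypothesis Hr : 0 < r <= 1.

Definition error_const := summand_const + 256 + taylor_global_const + 4.

Lemma summand_taylor_error d n : 4 <= INR d ->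
  Rabs (summand r d n - rpow_taylor3 r (scaled_index r d n)) <= error_const * error_majorant r d n.
Proof.
  intros Hd. destruct (error_majorant_parts r Hr d n Hd) as [P1 [P2 P3]].
  assert (0 <= taylor_global_const)
    by (unfold taylor_global_const; pose proof taylor_const_nonneg; lra).
  assert (0 <= summand_const) by (unfold summand_const; pose proof (exp_pos 24); lra).
  unfold error_majorant, error_const. destruct n as [|m].
  - simpl summand. rewrite Rminus_0_l, Rabs_Ropp.
    assert (HY : -1/2 <= scaled_index r d 0 <= 0).
    { split; [apply scaled_index_ge; auto|].
      unfold scaled_index. apply Rle_div_l; simpl; lra. }
    pose proof (rpow_taylor3_small r Hr (scaled_index r d 0) ltac:(lra)).
    assert (1 <= (scaled_index r d 0 - 1) ^ 4).
    { replace ((scaled_index r d 0 - 1) ^ 4) with ((1 - scaled_index r d 0) ^ 4) by ring.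
      rewrite <- (pow1 4). apply pow_incr. lra. }
    nra.
  - pose proof (scaled_index_pos r Hr d (S m) ltac:(lra) ltac:(lia)).
    pose proof (summand_near_rpow r Hr d (S m) Hd ltac:(lia)).
    pose proof (rpow_taylor3_error r Hr (scaled_index r d (S m)) ltac:(assumption)).
    eapply Rle_trans.
    { replace (summand r d (S m) - rpow_taylor3 r (scaled_index r d (S m)))
        with ((summand r d (S m) - Rpower (scaled_index r d (S m)) r)
              + (Rpower (scaled_index r d (S m)) r - rpow_taylor3 r (scaled_index r d (S m))))
        by ring.
      apply Rabs_triang. }
    nra.
Qed.

Lemma binom_mean_taylor_model : exists b c, forall d, 0 < INR d ->
  INR d * (binom_mean d (fun n => rpow_taylor3 r (scaled_index r d n)) - 1)
  = 5 * r * (r - 1) / 2 + b / INR d + c / INR d ^ 2 + 0 / INR d ^ 3.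
Proof.
  set (q2 := r * (r - 1) / 2). set (q3 := r * (r - 1) * (r - 2) / 6).
  exists (4 * q2 * (r - 1) ^ 2 + 6 * q3 * (r - 1)), (8 * q3 * (r - 1) ^ 3).
  intros d Hd. set (D := INR d).
  set (al := 2 / D). set (be := 2 * (r - 1) / D).
  rewrite (binom_mean_ext d _ (fun n => (1 + r * be + q2 * be ^ 2 + q3 * be ^ 3)
     + (r * al + 2 * q2 * al * be + 3 * q3 * al * be ^ 2) * (INR n - INR d / 2)
     + (q2 * al ^ 2 + 3 * q3 * al ^ 2 * be) * (INR n - INR d / 2) ^ 2
     + (q3 * al ^ 3) * (INR n - INR d / 2) ^ 3 + 0 * (INR n - INR d / 2) ^ 4)).
  2:{ intros n Hn. unfold rpow_taylor3, scaled_index, q2, q3, al, be. fold D. field.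
      unfold D; lra. }
  rewrite binom_mean_centered_quartic. fold D. unfold al, be, q2, q3. field. unfold D; lra.
Qed.

Lemma binom_mean_majorant : exists b c e, forall d, 0 < INR d ->
  INR d * binom_mean d (error_majorant r d) = 0 + b / INR d + c / INR d ^ 2 + e / INR d ^ 3.
Proof.
  exists (2 + 3 / 16 + 3), (2 * (r - 1) - 1 / 8 + 24 * (r - 1) ^ 2 - 2), (16 * (r - 1) ^ 4).
  intros d Hd. set (D := INR d).
  set (al := 2 / D). set (be := 2 * (r - 1) / D).
  rewrite (binom_mean_ext d _ (fun n => ((2 + be) / D ^ 2 + be ^ 4)
     + (al / D ^ 2 + 4 * al * be ^ 3) * (INR n - INR d / 2)
     + (6 * al ^ 2 * be ^ 2) * (INR n - INR d / 2) ^ 2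
     + (4 * al ^ 3 * be) * (INR n - INR d / 2) ^ 3 + (1 / D ^ 4 + al ^ 4) * (INR n - INR d / 2) ^ 4)).
  2:{ intros n Hn. unfold error_majorant, scaled_index, al, be. fold D. field. unfold D; lra. }
  rewrite binom_mean_centered_quartic. fold D. unfold al, be. field. unfold D; lra.
Qed.

Lemma normalized_sum_lim :
  is_lim_seq (fun d => INR d * (binom_mean d (summand r d) - 1)) (5 * r * (r - 1) / 2).
Proof.
  destruct binom_mean_taylor_model as [b [c Hmodel]].
  destruct binom_mean_majorant as [b' [c' [e' Hmaj]]].
  set (model := fun d => INR d * (binom_mean d (fun n => rpow_taylor3 r (scaled_index r d n)) - 1)).
  set (err := fun d => INR d * binom_mean d (fun n => summand r d n
                                                   - rpow_taylor3 r (scaled_index r d n))).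
  set (bound := fun d : nat => error_const * (0 + b' / INR d + c' / INR d ^ 2 + e' / INR d ^ 3)).
  assert (Hbound : is_lim_seq bound 0).
  { replace (Finite 0) with (Rbar_mult error_const 0) by (simpl; f_equal; ring).
    apply is_lim_seq_scal_l, inv_poly_lim. }
  assert (Herr : is_lim_seq err 0).
  { apply is_lim_seq_le_le_loc with (fun d => - bound d) bound; [| |exact Hbound].
    - destruct eventually_ge4 as [N HN]. exists N. intros d Hd. specialize (HN d Hd).
      assert (Rabs (binom_mean d (fun n => summand r d n - rpow_taylor3 r (scaled_index r d n)))
              <= error_const * binom_mean d (error_majorant r d)).
      { rewrite <- binom_mean_scal. apply binom_mean_abs_le.
        intros n _. now apply summand_taylor_error. }
      unfold err, bound. rewrite <- Hmaj by lra. apply Rabs_le_between.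
      rewrite Rabs_mult, Rabs_pos_eq by lra.
      replace (error_const * (INR d * binom_mean d (error_majorant r d)))
        with (INR d * (error_const * binom_mean d (error_majorant r d))) by ring.
      apply Rmult_le_compat_l; lra.
    - replace (Finite 0) with (Rbar_opp 0) by (simpl; f_equal; ring).
      now apply -> is_lim_seq_opp. }
  assert (Hmod : is_lim_seq model (5 * r * (r - 1) / 2)).
  { apply is_lim_seq_ext_loc with (fun d => 5 * r * (r - 1) / 2 + b / INR d + c / INR d ^ 2
                                             + 0 / INR d ^ 3); [|apply inv_poly_lim].
    destruct eventually_ge4 as [N HN]. exists N. intros d Hd. specialize (HN d Hd).
    unfold model. rewrite Hmodel by lra. reflexivity. }
  replace (5 * r * (r - 1) / 2) with (5 * r * (r - 1) / 2 + 0) by ring.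
  apply is_lim_seq_ext with (fun d => model d + err d); [|now apply is_lim_seq_plus'].
  intros d. unfold model, err.
  rewrite (binom_mean_ext d (summand r d)
             (fun n => rpow_taylor3 r (scaled_index r d n)
                       + (summand r d n - rpow_taylor3 r (scaled_index r d n))))
    by (intros; ring).
  rewrite binom_mean_plus. ring.
Qed.
End NormalizedSum.

(** * Powers of sequences of the form 1 + L/d + o(1/d) *)

Lemma rpow_quadratic_near_1 p : exists K, 0 <= K /\ forall y, 1/2 <= y <= 2 ->
  Rabs (Rpower y p - 1 - p * (y - 1)) <= K * (y - 1) ^ 2.
Proof.
  set (M := Rabs (p * (p - 1)) * exp (Rabs (p - 2) * ln 2)).
  assert (HM : 0 <= M) by (unfold M; apply Rmult_le_pos; [apply Rabs_pos | left; apply exp_pos]).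
  assert (Hln2 : 0 < ln 2) by (rewrite <- ln_1; apply ln_increasing; lra).
  assert (Hd2 : forall t, 1/2 <= t <= 2 -> Rpower t (p - 2) <= exp (Rabs (p - 2) * ln 2)).
  { intros t Ht. unfold Rpower. apply exp_le.
    assert (- ln 2 <= ln t) by (rewrite <- ln_Rinv by lra; apply ln_le; lra).
    assert (ln t <= ln 2) by (apply ln_le; lra).
    assert ((p - 2) * ln t <= Rabs (p - 2) * Rabs (ln t)) by (rewrite <- Rabs_mult; apply Rle_abs).
    assert (Rabs (ln t) <= ln 2) by (apply Rabs_le; lra).
    pose proof (Rabs_pos (p - 2)). nra. }
  assert (B1 : forall y, 1/2 <= y <= 2 ->
            Rabs (p * Rpower y (p - 1) - p) <= M * Rabs (y - 1) ^ 1).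
  { intros y Hy.
    apply (mvt_pow_bound (fun t => p * Rpower t (p - 1) - p)
             (fun t => p * ((p - 1) * Rpower t (p - 1 - 1))) M 0 (1/2) 2); try lra.
    - rewrite Rpower_1_base. ring.
    - intros t Ht. apply (rpow_affine_derive _ p (p - 1) _ (fun _ => - p) 0);
        [lra | intros; ring | auto_derive; auto | ring].
    - intros t Ht. simpl. rewrite Rmult_1_r. unfold M.
      replace (p * ((p - 1) * Rpower t (p - 1 - 1))) with ((p * (p - 1)) * Rpower t (p - 2))
        by (replace (p - 1 - 1) with (p - 2) by ring; ring).
      rewrite Rabs_mult, (Rabs_pos_eq (Rpower t (p - 2))) by (left; apply Rpower_pos).
      apply Rmult_le_compat_l; [apply Rabs_pos | now apply Hd2]. }
  exists M. split; [exact HM|]. intros y Hy.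
  assert (H : Rabs (Rpower y p - 1 - p * (y - 1)) <= M * Rabs (y - 1) ^ 2).
  { apply (mvt_pow_bound (fun t => Rpower t p - 1 - p * (t - 1)) (fun t => p * Rpower t (p - 1) - p)
             M 1 (1/2) 2); auto; try lra.
    - rewrite Rpower_1_base. ring.
    - intros t Ht. apply (rpow_affine_derive _ 1 p _ (fun u => - 1 - p * (u - 1)) (- p));
        [lra | intros; ring | auto_derive; auto; ring | ring]. }
  rewrite RPow_abs, (Rabs_pos_eq ((y - 1) ^ 2)) in H by apply pow2_ge_0. exact H.
Qed.

Lemma normalized_power_lim (S : nat -> R) (L p : R) :
  is_lim_seq (fun d => INR d * (S d - 1)) L ->
  is_lim_seq (fun d => INR d * (Rpower (S d) p - 1)) (p * L).
Proof.
  intros HL.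
  destruct (rpow_quadratic_near_1 p) as [K [HK0 HK]].
  assert (HS : is_lim_seq (fun d => S d - 1) 0).
  { apply is_lim_seq_ext_loc with (fun d => (INR d * (S d - 1)) * / INR d).
    { exists 1%nat. intros n Hn. apply (le_INR 1) in Hn. simpl in Hn. field. lra. }
    replace (Finite 0) with (Finite (L * 0)) by (f_equal; ring).
    apply is_lim_seq_mult'; [exact HL | exact inv_INR_lim]. }
  assert (Hnear : eventually (fun d => 1/2 <= S d <= 2)).
  { apply is_lim_seq_spec in HS. destruct (HS (mkposreal (1/2) ltac:(lra))) as [N HN].
    exists N. intros n Hn. specialize (HN n Hn). simpl in HN. rewrite Rminus_0_r in HN.
    apply Rabs_lt_between in HN. lra. }
  set (E := fun d => INR d * (Rpower (S d) p - 1 - p * (S d - 1))).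
  set (bound := fun d => K * (INR d * (S d - 1)) * (S d - 1)).
  assert (Hbound : is_lim_seq bound 0).
  { replace (Finite 0) with (Finite (K * L * 0)) by (f_equal; ring).
    apply is_lim_seq_mult'; [apply (is_lim_seq_scal_l _ K L) |]; assumption. }
  assert (HE : is_lim_seq E 0).
  { apply is_lim_seq_le_le_loc with (fun d => - bound d) bound; [| |exact Hbound].
    - destruct Hnear as [N HN]. exists N. intros n Hn.
      specialize (HK (S n) (HN n Hn)). pose proof (pos_INR n).
      unfold E, bound. apply Rabs_le_between. rewrite Rabs_mult, Rabs_pos_eq by lra.
      replace (K * (INR n * (S n - 1)) * (S n - 1)) with (INR n * (K * (S n - 1) ^ 2)) by ring.
      apply Rmult_le_compat_l; lra.
    - replace (Finite 0) with (Rbar_opp 0) by (simpl; f_equal; ring).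
      now apply -> is_lim_seq_opp. }
  replace (p * L) with (p * L + 0) by ring.
  apply is_lim_seq_ext with (fun d => p * (INR d * (S d - 1)) + E d); [intros d; unfold E; ring|].
  apply is_lim_seq_plus'; [apply (is_lim_seq_scal_l _ p L) | ]; assumption.
Qed.

Lemma sum_n_m_from_1 (a : nat -> R) d :
  sum_n_m a 1 d = sum_f_R0 (fun n => match n with O => 0 | _ => a n end) d.
Proof.
  induction d as [|k IH]; [now rewrite sum_n_m_zero by lia|].
  rewrite sum_n_Sm by lia. rewrite tech5, <- IH. reflexivity.
Qed.

Section Sigma.
Variable s : R.
Hypothesis Hs : 0 < s <= 2.

Lemma I0_binom_mean d : (1 <= d)%nat ->
  Rpower (2 / INR d) (s / 2) * I0 s d = binom_mean d (summand (s / 2) d).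
Proof.
  intros Hd. unfold I0, binom_mean, binom_sum. rewrite sum_n_m_from_1.
  rewrite <- Rmult_assoc, scal_sum.
  symmetry. unfold Rdiv at 1. rewrite Rmult_comm, scal_sum. symmetry.
  apply sum_eq. intros [|m] Hn; simpl; [ring|].
  unfold gamma_ratio, Rdiv. ring.
Qed.

Lemma binom_mean_summand_pos d : (1 <= d)%nat -> 0 < binom_mean d (summand (s / 2) d).
Proof.
  intros Hd. assert (Hr : 0 < s / 2 <= 1) by lra.
  assert (Hpos : forall n, (1 <= n)%nat -> 0 < summand (s / 2) d n).
  { intros [|m] Hm; [lia|]. apply Rmult_lt_0_compat; [apply Rpower_pos|].
    apply Rmult_lt_0_compat; [apply Rpower_pos|].
    apply gamma_ratio_pos; [exact Hr|]. rewrite S_INR. pose proof (pos_INR m). lra. }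
  unfold binom_mean, binom_sum. apply Rdiv_lt_0_compat; [|apply pow_lt; lra].
  destruct d as [|k]; [lia|]. rewrite tech5.
  assert (0 <= sum_f_R0 (fun n => Binomial.C (S k) n * summand (s / 2) (S k) n) k).
  { apply cond_pos_sum. intros [|n]; [simpl; lra|].
    apply Rmult_le_pos; [left; apply binom_C_pos | left; apply Hpos; lia]. }
  pose proof (binom_C_pos (S k) (S k)). pose proof (Hpos (S k) ltac:(lia)). nra.
Qed.

Lemma sigma0_repr d : (1 <= d)%nat ->
  sigma0 s d = Rpower (binom_mean d (summand (s / 2) d)) (- (1 / s)) * (sqrt 2 / sqrt (INR d)).
Proof.
  intros Hd. assert (HD : 1 <= INR d) by (apply (le_INR 1); auto).
  set (S := binom_mean d (summand (s / 2) d)).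
  assert (HS : 0 < S) by (apply binom_mean_summand_pos; auto).
  assert (HI : I0 s d = S * Rpower (INR d / 2) (s / 2)).
  { unfold S. rewrite <- I0_binom_mean by auto.
    rewrite Rmult_assoc, (Rmult_comm (I0 s d)), <- Rmult_assoc.
    rewrite Rpower_mult_distr by (try apply Rdiv_lt_0_compat; lra).
    replace (2 / INR d * (INR d / 2)) with 1 by (field; lra). rewrite Rpower_1_base. ring. }
  unfold sigma0. rewrite HI.
  assert (HP : 0 < Rpower (INR d / 2) (s / 2)) by apply Rpower_pos.
  rewrite <- Rpower_mult_distr by auto. f_equal.
  rewrite Rpower_mult. replace (s / 2 * - (1 / s)) with (- / 2) by (field; lra).
  rewrite Rpower_Ropp, Rpower_sqrt, sqrt_div_alt by lra.
  assert (0 < sqrt (INR d)) by (apply sqrt_lt_R0; lra).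
  assert (0 < sqrt 2) by (apply sqrt_lt_R0; lra).
  field. split; lra.
Qed.

Lemma summand_mean_power_lim p :
  is_lim_seq (fun d => INR d * (Rpower (binom_mean d (summand (s / 2) d)) p - 1))
             (p * (5 * s * (s - 2) / 8)).
Proof.
  apply normalized_power_lim.
  replace (5 * s * (s - 2) / 8) with (5 * (s / 2) * (s / 2 - 1) / 2) by field.
  apply normalized_sum_lim. lra.
Qed.

Lemma eventually_ge1 : eventually (fun d => (1 <= d)%nat /\ 1 <= INR d).
Proof.
  exists 1%nat. intros n Hn. split; [exact Hn|]. apply (le_INR 1) in Hn. simpl in Hn. lra.
Qed.

Lemma sigma0_sq_expansion :
  is_lim_seq (fun d : nat =>
      (sigma0 s d ^ 2 - (2 / INR d + 5 * (2 - s) / (2 * INR d ^ 2))) / (1 / INR d ^ 2)) 0.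
Proof.
  set (S := fun d => binom_mean d (summand (s / 2) d)).
  apply is_lim_seq_ext_loc
    with (fun d => 2 * (INR d * (Rpower (S d) (- (1 / s) * 2) - 1)) - 5 * (2 - s) / 2).
  - destruct eventually_ge1 as [N HN]. exists N. intros n Hn. destruct (HN n Hn) as [Hd HD].
    rewrite sigma0_repr by exact Hd. fold (S n).
    pose proof (binom_mean_summand_pos n Hd) as HS. fold (S n) in HS.
    rewrite <- Rpower_mult, (Rpower_pow 2 _ (Rpower_pos _ _)).
    set (V := Rpower (S n) (- (1 / s))).
    assert (0 < sqrt (INR n)) by (apply sqrt_lt_R0; lra).
    replace ((V * (sqrt 2 / sqrt (INR n))) ^ 2)
      with (V ^ 2 * (sqrt 2 * sqrt 2) / (sqrt (INR n) * sqrt (INR n))) by (field; lra).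
    rewrite !sqrt_sqrt by lra. field. lra.
  - replace (Finite 0) with (Finite (2 * (- (1 / s) * 2 * (5 * s * (s - 2) / 8)) - 5 * (2 - s) / 2))
      by (f_equal; field; lra).
    apply is_lim_seq_minus'; [|apply is_lim_seq_const].
    apply (is_lim_seq_scal_l _ 2 (- (1 / s) * 2 * (5 * s * (s - 2) / 8))).
    apply summand_mean_power_lim.
Qed.

Lemma sigma0_expansion :
  is_lim_seq (fun d : nat =>
      (sigma0 s d - (sqrt 2 / sqrt (INR d) + 5 * sqrt 2 * (2 - s) / (8 * INR d * sqrt (INR d))))
        / (1 / (INR d * sqrt (INR d)))) 0.
Proof.
  set (S := fun d => binom_mean d (summand (s / 2) d)).
  apply is_lim_seq_ext_loc
    with (fun d => sqrt 2 * (INR d * (Rpower (S d) (- (1 / s)) - 1)) - 5 * sqrt 2 * (2 - s) / 8).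
  - destruct eventually_ge1 as [N HN]. exists N. intros n Hn. destruct (HN n Hn) as [Hd HD].
    rewrite sigma0_repr by exact Hd. fold (S n).
    assert (0 < sqrt (INR n)) by (apply sqrt_lt_R0; lra).
    field. split; lra.
  - replace (Finite 0)
      with (Finite (sqrt 2 * (- (1 / s) * (5 * s * (s - 2) / 8)) - 5 * sqrt 2 * (2 - s) / 8))
      by (f_equal; field; lra).
    apply is_lim_seq_minus'; [|apply is_lim_seq_const].
    apply (is_lim_seq_scal_l _ (sqrt 2) (- (1 / s) * (5 * s * (s - 2) / 8))).
    apply summand_mean_power_lim.
Qed.
End Sigma.

Theorem mainTheorem2 (s : R) (hs0 : 0 < s) (hs2 : s <= 2) :
  is_lim_seq (fun d : nat =>
      (sigma0 s d ^ 2 - (2 / INR d + 5 * (2 - s) / (2 * INR d ^ 2)))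
        / (1 / INR d ^ 2)) 0
  /\
  is_lim_seq (fun d : nat =>
      (sigma0 s d - (sqrt 2 / sqrt (INR d)
                     + 5 * sqrt 2 * (2 - s) / (8 * INR d * sqrt (INR d))))
        / (1 / (INR d * sqrt (INR d)))) 0.
Proof.
  split; [apply sigma0_sq_expansion | apply sigma0_expansion]; lra.
Qed.
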